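(* Let $H$ be an arbitrary group and let $A$ and $B$ be isomorphic subgroups of $H$, with an isomorphism $\mu: A\to B$. Let $G=\langle H, t \mid t^{-1}at=\mu(a),\ a\in A\rangle$ be the HNN-extension of $H$ with associated subgroups $A$ and $B$. Then: (1) $G$ is weakly hyperbolic relative to $\{H\}$. (2) If $H$ is weakly hyperbolic relative to $\{A,B\}$, then $G$ is weakly hyperbolic relative to $\{A\}$.
   Context: Let $G$ be a group and $\mathcal H=\{H_1,\ldots,H_m\}$ a collection of subgroups of $G$. A subset $X\subset G$ is a relative generating set of $G$ with respect to $\mathcal H$ if $G$ is generated by $X\cup H_1\cup\cdots\cup H_m$. The relative Cayley graph of $G$ with respect to $\mathcal H$ (and $X$) is the Cayley graph of $G$ with respect to the generating set $X\cup H_1\cup\cdots\cup H_m$, with the combinatorial metric (every edge has length 1). $G$ is weakly hyperbolic relative to $\mathcal H$ if there exists a finite relative generating set $X$ of $G$ with respect to $\mathcal H$ such that the corresponding relative Cayley graph is a hyperbolic metric space (Gromov hyperbolic: geodesic triangles are uniformly $\delta$-thin). *)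

From Stdlib Require Import List.
Import ListNotations.

Set Implicit Arguments.
Set Maximal Implicit Insertion.

Record group := Group {
  gcar :> Type;
  gmul : gcar -> gcar -> gcar;
  gone : gcar;
  ginv : gcar -> gcar;
  gmulA : forall x y z, gmul x (gmul y z) = gmul (gmul x y) z;
  gmul1 : forall x, gmul gone x = x;
  gmulV : forall x, gmul (ginv x) x = gone
}.
Arguments gmul {g}.
Arguments gone {g}.
Arguments ginv {g}.

Definition is_subgroup {G : group} (P : G -> Prop) : Prop :=
  P gone /\ (forall x y, P x -> P y -> P (gmul x y)) /\ (forall x, P x -> P (ginv x)).

Definition is_hom {G K : group} (f : G -> K) : Prop :=
  forall x y, f (gmul x y) = gmul (f x) (f y).

Definition is_iso_between {H : group} (A B : H -> Prop) (mu : H -> H) : Prop :=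
  (forall a, A a -> B (mu a)) /\
  (forall a1 a2, A a1 -> A a2 -> mu (gmul a1 a2) = gmul (mu a1) (mu a2)) /\
  (forall a1 a2, A a1 -> A a2 -> mu a1 = mu a2 -> a1 = a2) /\
  (forall b, B b -> exists a, A a /\ mu a = b).

(* (G, i, t) is the HNN-extension  < H, t | t^-1 a t = mu(a), a in A >,
   characterized by the universal property of this presentation. *)
Definition is_HNN_extension {H : group} (A : H -> Prop) (mu : H -> H)
    {G : group} (i : H -> G) (t : G) : Prop :=
  is_hom i /\
  (forall a, A a -> gmul (gmul (ginv t) (i a)) t = i (mu a)) /\
  (forall (K : group) (f : H -> K) (s : K),
     is_hom f ->
     (forall a, A a -> gmul (gmul (ginv s) (f a)) s = f (mu a)) ->
     exists phi : G -> K,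
       (is_hom phi /\ (forall h, phi (i h) = f h) /\ phi t = s) /\
       (forall psi : G -> K,
          is_hom psi -> (forall h, psi (i h) = f h) -> psi t = s ->
          forall g, psi g = phi g)).

Definition generates {G : group} (S : G -> Prop) : Prop :=
  forall g : G, forall P : G -> Prop, is_subgroup P -> (forall s, S s -> P s) -> P g.

Definition cay_adj {G : group} (S : G -> Prop) (g h : G) : Prop :=
  S (gmul (ginv g) h) \/ S (gmul (ginv h) g).

Definition is_path {G : group} (S : G -> Prop) (n : nat) (p : nat -> G) (x y : G) : Prop :=
  p 0 = x /\ p n = y /\ forall k, k < n -> cay_adj S (p k) (p (Datatypes.S k)).

Definition walk {G : group} (S : G -> Prop) (n : nat) (x y : G) : Prop :=
  exists p, is_path S n p x y.

Definition dist_le {G : group} (S : G -> Prop) (k : nat) (x y : G) : Prop :=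
  exists m, m <= k /\ walk S m x y.

Definition is_geodesic {G : group} (S : G -> Prop) (n : nat) (p : nat -> G) (x y : G) : Prop :=
  is_path S n p x y /\ forall m, walk S m x y -> n <= m.

(* Gromov hyperbolicity of the Cayley graph: geodesic triangles are uniformly
   delta-thin (each side lies in the delta-neighbourhood of the other two). *)
Definition cayley_hyperbolic {G : group} (S : G -> Prop) : Prop :=
  exists delta : nat,
    forall (x y z : G) (n1 n2 n3 : nat) (p1 p2 p3 : nat -> G),
      is_geodesic S n1 p1 x y -> is_geodesic S n2 p2 y z -> is_geodesic S n3 p3 z x ->
      forall k, k <= n1 ->
        exists j, (j <= n2 /\ dist_le S delta (p1 k) (p2 j)) \/
                  (j <= n3 /\ dist_le S delta (p1 k) (p3 j)).

Definition rel_gen_set {G : group} (X : list G) (Hs : list (G -> Prop)) : G -> Prop :=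
  fun g => In g X \/ exists P, In P Hs /\ P g.

Definition weakly_rel_hyperbolic {G : group} (Hs : list (G -> Prop)) : Prop :=
  exists X : list G,
    generates (rel_gen_set X Hs) /\ cayley_hyperbolic (rel_gen_set X Hs).

Definition image {H G : group} (i : H -> G) (P : H -> Prop) : G -> Prop :=
  fun g => exists h, P h /\ i h = g.

(* Vertices of the Bass-Serre tree of G are encoded by the word part of the
   Britton normal form i c1 t^e1 ... i cn t^en i h, obtained from the
   universal property through the action of G on normal forms.  Along an edge
   of a Cayley graph of G the word stays the same or gains/loses its last
   letter, so the graph maps to the tree of words.

   (1) For the generators {t} and H, each fibre g H has diameter 1 and a
   geodesic projects onto the tree geodesic between its endpoints.  Triangles
   in a tree are tripods, so geodesic triangles are 1-thin.

   (2) Let Y be a finite relative generating set of H for {A, B} with a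
   hyperbolic relative Cayley graph, and add B to the generators {t} u Y u A.
   A maximal segment of a geodesic inside one fibre is then a geodesic of the
   relative Cayley graph of H, and the sides of a triangle through a common
   vertex of the tree have such segments in that fibre with 1-close ends,
   which gives thin quadrilaterals or hexagons there.  Removing B changes distances by a factor at most 3, as
   i b = t^-1 i (mu^-1 b) t, and hyperbolicity survives this by the Morse
   lemma. *)

From Stdlib Require Import List PeanoNat Lia.
From Stdlib Require Import Classical ClassicalEpsilon ProofIrrelevance.
From Stdlib Require Import FunctionalExtensionality PropExtensionality.
Import ListNotations.

Notation "x ** y" := (gmul x y) (at level 40, left associativity).

(** * Groups and Cayley graphs *)

Section GroupLemmas.
Context {G : group}.
Implicit Types x y z : G.

Lemma mulgA x y z : x ** (y ** z) = x ** y ** z. Proof. apply gmulA. Qed.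
Lemma mul1g x : gone ** x = x. Proof. apply gmul1. Qed.
Lemma mulVg x : ginv x ** x = gone. Proof. apply gmulV. Qed.

Lemma mulgV x : x ** ginv x = gone.
Proof.
  rewrite <- (mul1g (x ** ginv x)), <- (mulVg (ginv x)) at 1.
  rewrite <- mulgA, (mulgA (ginv x) x (ginv x)), mulVg, mul1g. apply mulVg.
Qed.
Lemma mulg1 x : x ** gone = x.
Proof. rewrite <- (mulVg x), mulgA, mulgV, mul1g. reflexivity. Qed.
Lemma mulKg x y : ginv x ** (x ** y) = y.
Proof. rewrite mulgA, mulVg, mul1g; reflexivity. Qed.
Lemma mulKVg x y : x ** (ginv x ** y) = y.
Proof. rewrite mulgA, mulgV, mul1g; reflexivity. Qed.
Lemma mulgK x y : x ** y ** ginv y = x.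
Proof. rewrite <- mulgA, mulgV, mulg1; reflexivity. Qed.
Lemma mulgKV x y : x ** ginv y ** y = x.
Proof. rewrite <- mulgA, mulVg, mulg1; reflexivity. Qed.
Lemma mulgI x y z : x ** y = x ** z -> y = z.
Proof. intro e. rewrite <- (mulKg x y), e, mulKg. reflexivity. Qed.
Lemma invg_of_mul_eq1 x y : x ** y = gone -> y = ginv x.
Proof. intro e. apply (mulgI x). rewrite e, mulgV. reflexivity. Qed.
Lemma invgK x : ginv (ginv x) = x.
Proof. symmetry. apply invg_of_mul_eq1, mulVg. Qed.
Lemma invg1 : ginv (@gone G) = gone.
Proof. symmetry. apply invg_of_mul_eq1, mul1g. Qed.
Lemma invMg x y : ginv (x ** y) = ginv y ** ginv x.
Proof. symmetry. apply invg_of_mul_eq1. rewrite mulgA, mulgK, mulgV. reflexivity. Qed.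
End GroupLemmas.

Ltac gnorm :=
  repeat progress rewrite ?invMg, ?invgK, ?invg1, ?mulgA, ?mulgK, ?mulgKV, ?mulVg, ?mulgV, ?mul1g, ?mulg1.

Lemma hom1 {G K : group} (f : G -> K) : is_hom f -> f gone = gone.
Proof. intro hf. apply (mulgI (f gone)). rewrite <- hf, mul1g, mulg1. reflexivity. Qed.
Lemma homV {G K : group} (f : G -> K) : is_hom f -> forall x, f (ginv x) = ginv (f x).
Proof. intros hf x. apply invg_of_mul_eq1. rewrite <- hf, mulgV. apply hom1; auto. Qed.

Section Subgroup.
Context {G : group} (P : G -> Prop) (hP : is_subgroup P).

Lemma subgroup1 : P gone. Proof. apply hP. Qed.
Lemma subgroupM x y : P x -> P y -> P (x ** y). Proof. apply hP. Qed.
Lemma subgroupV x : P x -> P (ginv x). Proof. apply hP. Qed.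
Lemma subgroupVM x y : P x -> P y -> P (ginv x ** y).
Proof. intros hx hy. apply subgroupM; [apply subgroupV|]; auto. Qed.
End Subgroup.

Lemma ex_minimal (P : nat -> Prop) :
  (exists n, P n) -> exists n, P n /\ forall m, P m -> n <= m.
Proof.
  intros [n Hn].
  assert (H : forall k n, n <= k -> P n -> exists n, P n /\ forall m, P m -> n <= m).
  { induction k as [|k IH]; intros n0 Hle Hn0.
    - exists n0; split; auto. intros m _. lia.
    - destruct (classic (exists m, P m /\ m < n0)) as [[m [Pm Hm]]|Hno].
      + apply (IH m); auto; lia.
      + exists n0; split; auto. intros m Pm. destruct (Nat.lt_ge_cases m n0); auto.
        exfalso; apply Hno; eauto. }
  apply (H n n); auto.
Qed.

Lemma discrete_ivt (P : nat -> Prop) a b : a <= b -> P a -> ~ P b ->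
  exists k, a <= k < b /\ P k /\ ~ P (S k).
Proof.
  intros Hab. induction Hab as [|b Hab IH]; intros Pa Pb; [contradiction|].
  destruct (classic (P b)) as [Pb'|Pb'].
  - exists b; repeat split; auto; lia.
  - destruct (IH Pa Pb') as [k [Hk1 Hk2]]. exists k; split; auto; lia.
Qed.

Lemma maximal_constant_block {T : Type} (f : nat -> T) n k : k <= n ->
  exists a b, a <= k <= b /\ b <= n /\ (forall j, a <= j <= b -> f j = f k) /\
    (a = 0 \/ f (a - 1) <> f k) /\ (b = n \/ f (S b) <> f k).
Proof.
  intro hk.
  destruct (ex_minimal (fun d => k + d <= n /\ (k + d = n \/ f (S (k + d)) <> f k)))
    as [db [[hb1 hb2] hbmin]]; [exists (n - k); split; [lia|left; lia]|].
  destruct (ex_minimal (fun d => d <= k /\ (k - d = 0 \/ f (k - d - 1) <> f k)))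
    as [da [[ha1 ha2] hamin]]; [exists k; split; [lia|left; lia]|].
  exists (k - da), (k + db). repeat split; try lia.
  - assert (Hb : forall d', d' <= db -> f (k + d') = f k).
    { induction d' as [|d' IH]; intro hd; [rewrite Nat.add_0_r; auto|].
      replace (k + S d') with (S (k + d')) by lia.
      apply NNPP. intro hne. assert (db <= d'); [|lia]. apply hbmin. split; [lia|right; auto]. }
    assert (Ha : forall d', d' <= da -> f (k - d') = f k).
    { induction d' as [|d' IH]; intro hd; [rewrite Nat.sub_0_r; auto|].
      replace (k - S d') with (k - d' - 1) by lia.
      apply NNPP. intro hne. assert (da <= d'); [|lia]. apply hamin. split; [lia|right; auto]. }
    intros j hj. destruct (Nat.le_ge_cases j k).
    + replace j with (k - (k - j)) by lia. apply Ha. lia.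
    + replace j with (k + (j - k)) by lia. apply Hb. lia.
  - destruct ha2 as [h|h]; [left; lia|right; auto].
  - destruct hb2 as [h|h]; [left; lia|right; auto].
Qed.

Section CayleyGraph.
Context {G : group} (Sg : G -> Prop).

Lemma cay_adj_sym x y : cay_adj Sg x y -> cay_adj Sg y x.
Proof. unfold cay_adj; tauto. Qed.

Lemma cay_adj_mull g x y : cay_adj Sg x y -> cay_adj Sg (g ** x) (g ** y).
Proof. unfold cay_adj. rewrite !invMg, <- !mulgA, !mulKg. auto. Qed.

Lemma walk0 x : walk Sg 0 x x.
Proof. exists (fun _ => x). repeat split; intros; lia. Qed.
Lemma walk0_eq x y : walk Sg 0 x y -> x = y.
Proof. intros [p [h0 [h1 _]]]. congruence. Qed.
Lemma walk1 x y : cay_adj Sg x y -> walk Sg 1 x y.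
Proof.
  intro h. exists (fun k => match k with 0 => x | _ => y end). repeat split.
  intros k hk. replace k with 0 by lia. exact h.
Qed.
Lemma walk1_adj x y : walk Sg 1 x y -> cay_adj Sg x y.
Proof. intros [p [h0 [h1 h]]]. subst. apply h. lia. Qed.

Lemma path_rev n p x y : is_path Sg n p x y -> is_path Sg n (fun k => p (n - k)) y x.
Proof.
  intros [h0 [h1 h]]. repeat split.
  - rewrite Nat.sub_0_r; auto.
  - rewrite Nat.sub_diag; auto.
  - intros k hk. apply cay_adj_sym. replace (n - k) with (S (n - S k)) by lia. apply h; lia.
Qed.
Lemma walk_rev n x y : walk Sg n x y -> walk Sg n y x.
Proof. intros [p hp]. eexists; apply path_rev; eauto. Qed.

Definition pcat (m : nat) (p q : nat -> G) : nat -> G :=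
  fun k => if Nat.leb k m then p k else q (k - m).

Lemma pcat_cases m n p q k : k <= m + n ->
  (k <= m /\ pcat m p q k = p k) \/ (k - m <= n /\ pcat m p q k = q (k - m)).
Proof. intro hk. unfold pcat. destruct (Nat.leb_spec k m); [left|right]; split; auto; lia. Qed.

Lemma path_cat m n p q x y z : is_path Sg m p x y -> is_path Sg n q y z ->
  is_path Sg (m + n) (pcat m p q) x z.
Proof.
  intros [p0 [p1 hp]] [q0 [q1 hq]]. unfold pcat. repeat split.
  - simpl. auto.
  - destruct (Nat.leb_spec (m + n) m).
    + replace n with 0 in * by lia. rewrite Nat.add_0_r in *. congruence.
    + replace (m + n - m) with n by lia. auto.
  - intros k hk. destruct (Nat.leb_spec k m); destruct (Nat.leb_spec (S k) m).
    + apply hp; lia.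
    + replace k with m in * by lia. replace (S m - m) with 1 by lia.
      rewrite p1, <- q0. apply hq. lia.
    + lia.
    + replace (S k - m) with (S (k - m)) by lia. apply hq; lia.
Qed.
Lemma walk_cat m n x y z : walk Sg m x y -> walk Sg n y z -> walk Sg (m + n) x z.
Proof. intros [p hp] [q hq]. eexists; eapply path_cat; eauto. Qed.

Lemma path_sub n p x y a b : is_path Sg n p x y -> a <= b <= n ->
  is_path Sg (b - a) (fun k => p (a + k)) (p a) (p b).
Proof.
  intros [h0 [h1 h]] hab. repeat split.
  - rewrite Nat.add_0_r; auto.
  - f_equal; lia.
  - intros k hk. replace (a + S k) with (S (a + k)) by lia. apply h; lia.
Qed.
Lemma walk_sub n p x y a b : is_path Sg n p x y -> a <= b <= n -> walk Sg (b - a) (p a) (p b).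
Proof. intros. eexists; eapply path_sub; eauto. Qed.

Lemma walk_mull g n x y : walk Sg n x y -> walk Sg n (g ** x) (g ** y).
Proof.
  intros [p [h0 [h1 h]]]. exists (fun k => g ** p k). repeat split; try congruence.
  intros k hk. apply cay_adj_mull; auto.
Qed.

Lemma geodesic_path n p x y : is_geodesic Sg n p x y -> is_path Sg n p x y.
Proof. intros [h _]; auto. Qed.

Lemma geodesic_sub_le n p x y a b m : is_geodesic Sg n p x y -> a <= b <= n ->
  walk Sg m (p a) (p b) -> b - a <= m.
Proof.
  intros [hp hmin] hab hw.
  assert (w1 : walk Sg (a - 0) (p 0) (p a)) by (eapply walk_sub; eauto; lia).
  assert (w2 : walk Sg (n - b) (p b) (p n)) by (eapply walk_sub; eauto; lia).
  destruct hp as [h0 [h1 _]]. rewrite h0 in w1. rewrite h1 in w2.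
  pose proof (hmin _ (walk_cat _ _ _ _ _ (walk_cat _ _ _ _ _ w1 hw) w2)). lia.
Qed.

Lemma geodesic_sub n p x y a b : is_geodesic Sg n p x y -> a <= b <= n ->
  is_geodesic Sg (b - a) (fun k => p (a + k)) (p a) (p b).
Proof.
  intros hg hab. split.
  - eapply path_sub; eauto. apply geodesic_path in hg; eauto.
  - intros m hw. eapply geodesic_sub_le; eauto.
Qed.

Lemma geodesic_rev n p x y : is_geodesic Sg n p x y -> is_geodesic Sg n (fun k => p (n - k)) y x.
Proof.
  intros [hp hmin]. split.
  - apply path_rev; auto.
  - intros m hw. apply hmin, walk_rev; auto.
Qed.

Lemma dist_le_refl x : dist_le Sg 0 x x.
Proof. exists 0; split; auto. apply walk0. Qed.
Lemma dist_le_mono a b x y : a <= b -> dist_le Sg a x y -> dist_le Sg b x y.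
Proof. intros h [m [hm w]]. exists m; split; auto; lia. Qed.
Lemma dist_le_sym a x y : dist_le Sg a x y -> dist_le Sg a y x.
Proof. intros [m [hm w]]. exists m; split; auto. apply walk_rev; auto. Qed.
Lemma dist_le_trans a b x y z : dist_le Sg a x y -> dist_le Sg b y z -> dist_le Sg (a + b) x z.
Proof. intros [m [hm w]] [m' [hm' w']]. exists (m + m'); split; [lia|]. eapply walk_cat; eauto. Qed.
Lemma dist_le_walk n x y : walk Sg n x y -> dist_le Sg n x y.
Proof. intro h. exists n; split; auto. Qed.
Lemma dist_le_adj x y : cay_adj Sg x y -> dist_le Sg 1 x y.
Proof. intro h. apply dist_le_walk, walk1; auto. Qed.
Lemma dist_le_eq a x y : x = y -> dist_le Sg a x y.
Proof. intros <-. apply (dist_le_mono 0); [lia|apply dist_le_refl]. Qed.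

Lemma path_dist_le n p x y k : is_path Sg n p x y -> k <= n -> dist_le Sg k x (p k).
Proof.
  intros hp hk. pose proof (walk_sub _ _ _ _ 0 k hp ltac:(lia)) as w.
  destruct hp as [h0 _]. rewrite Nat.sub_0_r, h0 in w. apply dist_le_walk, w.
Qed.

Lemma geodesic_dist_le n p x y a b c : is_geodesic Sg n p x y -> a <= b <= n ->
  dist_le Sg c (p a) (p b) -> b - a <= c.
Proof. intros hg hab [m [hm w]]. pose proof (geodesic_sub_le _ _ _ _ _ _ _ hg hab w). lia. Qed.

Lemma connected_of_generates : generates Sg -> forall x y, exists n, walk Sg n x y.
Proof.
  intros hgen.
  assert (from1 : forall g, exists n, walk Sg n gone g).
  { intro g. apply (hgen g (fun g => exists n, walk Sg n gone g)).
    - split; [|split].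
      + exists 0; apply walk0.
      + intros a b [n wa] [m wb]. exists (n + m). eapply walk_cat; eauto.
        apply (walk_mull a) in wb. rewrite mulg1 in wb. exact wb.
      + intros a [n wa]. exists n. apply (walk_mull (ginv a)) in wa.
        rewrite mulg1, mulVg in wa. apply walk_rev; auto.
    - intros s hs. exists 1. apply walk1. left. rewrite invg1, mul1g; auto. }
  intros x y. destruct (from1 (ginv x ** y)) as [n w]. exists n.
  apply (walk_mull x) in w. rewrite mulg1, mulKVg in w. auto.
Qed.

Lemma geodesic_exists x y : (exists n, walk Sg n x y) -> exists n p, is_geodesic Sg n p x y.
Proof.
  intro h. destruct (ex_minimal (fun n => walk Sg n x y) h) as [n [[p hp] hmin]].
  exists n, p. split; auto.
Qed.

End CayleyGraph.

Lemma dist_le_of_walk {G : group} (S1 S2 : G -> Prop) c :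
  (forall s, S2 s -> dist_le S1 c gone s) ->
  forall m x y, walk S2 m x y -> dist_le S1 (c * m) x y.
Proof.
  intros h m x y [p [h0 [h1 hp]]].
  assert (step : forall u v, S2 (ginv u ** v) -> dist_le S1 c u v).
  { intros u v e. destruct (h _ e) as [l [hl wl]]. exists l. split; auto.
    apply (walk_mull S1 u) in wl. rewrite mulg1, mulKVg in wl. auto. }
  assert (Hk : forall k, k <= m -> dist_le S1 (c * k) x (p k)).
  { induction k as [|k IH]; intro hk.
    - rewrite Nat.mul_0_r, <- h0. apply dist_le_refl.
    - replace (c * S k) with (c * k + c) by lia. eapply dist_le_trans; [apply IH; lia|].
      destruct (hp k ltac:(lia)) as [e|e]; [|apply dist_le_sym]; apply step, e. }
  rewrite <- h1. apply Hk. lia.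
Qed.

(** * The tree of words *)

(* The Bass-Serre tree is modelled as the rooted tree of words over E, in
   which w and w ++ [y] are adjacent.  The tree geodesic from a to b consists
   of the prefixes of a or b that extend their longest common prefix. *)
Section WordTree.
Context {E : Type} (e0 : E).

Definition prefix (p q : list E) := exists s, q = p ++ s.
Definition on_geodesic (a b v : list E) :=
  (prefix v a \/ prefix v b) /\ forall c, prefix c a -> prefix c b -> prefix c v.
Definition tree_step (w w' : list E) :=
  w = w' \/ (exists y, w' = w ++ [y]) \/ (exists y, w = w' ++ [y]).
Definition tree_adj (u v : list E) := (exists y, u = v ++ [y]) \/ (exists y, v = u ++ [y]).

Lemma prefix_refl p : prefix p p. Proof. exists []; rewrite app_nil_r; auto. Qed.
Lemma prefix_trans p q r : prefix p q -> prefix q r -> prefix p r.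
Proof. intros [s1 ->] [s2 ->]. exists (s1 ++ s2). rewrite app_assoc; auto. Qed.
Lemma prefix_nil p : prefix [] p. Proof. exists p; auto. Qed.
Lemma prefix_app p s : prefix p (p ++ s). Proof. exists s; auto. Qed.
Lemma prefix_len p q : prefix p q -> length p <= length q.
Proof. intros [s ->]. rewrite length_app; lia. Qed.
Lemma prefix_antisym p q : prefix p q -> prefix q p -> p = q.
Proof.
  intros [s1 H1] [s2 H2]. subst q. rewrite <- app_assoc in H2.
  assert (length (s1 ++ s2) = 0).
  { apply (f_equal (@length E)) in H2. rewrite length_app in H2. lia. }
  destruct s1; [rewrite app_nil_r; auto| simpl in H; lia].
Qed.
Lemma prefix_cons x p q : prefix (x :: p) (x :: q) <-> prefix p q.
Proof. split; intros [s H]; exists s; [injection H; auto| simpl; congruence]. Qed.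

Lemma prefix_comparable p q w : prefix p w -> prefix q w -> prefix p q \/ prefix q p.
Proof.
  revert q w. induction p as [|a p IH]; intros q w hp hq.
  - left; apply prefix_nil.
  - destruct q as [|b q]; [right; apply prefix_nil|].
    destruct hp as [s1 H1]. destruct hq as [s2 H2]. subst w. simpl in H2. injection H2 as -> H2.
    destruct (IH q (p ++ s1)) as [h|h]; [apply prefix_app| exists s2; auto| |].
    + left; apply prefix_cons; auto.
    + right; apply prefix_cons; auto.
Qed.

Lemma prefix_snoc q w y : prefix q (w ++ [y]) -> prefix q w \/ q = w ++ [y].
Proof.
  intros h. destruct (prefix_comparable q w (w ++ [y]) h (prefix_app _ _)) as [h1|h1]; auto.
  destruct h1 as [s ->]. destruct h as [s' H]. rewrite <- app_assoc in H.
  apply app_inv_head in H. destruct s as [|z s].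
  - left. rewrite app_nil_r. apply prefix_refl.
  - right. simpl in H. destruct s; [simpl in H; injection H as ->; auto|].
    apply (f_equal (@length E)) in H. simpl in H. rewrite length_app in H. simpl in H. lia.
Qed.

Lemma prefix_next v c : prefix v c -> v <> c -> prefix (v ++ [nth (length v) c e0]) c.
Proof.
  intros [s ->] hne. destruct s as [|z s]; [rewrite app_nil_r in hne; congruence|].
  rewrite app_nth2; [|lia]. rewrite Nat.sub_diag. simpl. exists s. rewrite <- app_assoc; auto.
Qed.

Lemma prefix_snoc_nth v x c : prefix (v ++ [x]) c -> nth (length v) c e0 = x.
Proof. intros [s ->]. rewrite <- app_assoc, app_nth2; [|lia]. rewrite Nat.sub_diag; auto. Qed.

Lemma prefix_snoc_not v x : ~ prefix (v ++ [x]) v.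
Proof. intro h. apply prefix_len in h. rewrite length_app in h. simpl in h. lia. Qed.

Lemma on_geodesic_sym a b v : on_geodesic a b v -> on_geodesic b a v.
Proof. intros [[h|h] h2]; split; auto. Qed.

Lemma on_geodesic_l a b : on_geodesic a b a.
Proof. split; [left; apply prefix_refl| auto]. Qed.
Lemma on_geodesic_r a b : on_geodesic a b b.
Proof. split; [right; apply prefix_refl| auto]. Qed.

Lemma on_geodesic_same v u : on_geodesic v v u -> u = v.
Proof.
  intros [[h|h] h2]; apply prefix_antisym; auto; apply h2; apply prefix_refl.
Qed.

Lemma tree_step_enter r x w w' : tree_step w w' -> ~ prefix (r ++ [x]) w -> prefix (r ++ [x]) w' ->
  w = r /\ w' = r ++ [x].
Proof.
  intros [->|[[y ->]|[y ->]]] h1 h2.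
  - contradiction.
  - destruct (prefix_snoc _ _ _ h2) as [h|h]; [contradiction|].
    apply app_inj_tail in h. destruct h as [-> ->]; auto.
  - exfalso. apply h1. eapply prefix_trans; eauto. apply prefix_app.
Qed.
Lemma tree_step_sym w w' : tree_step w w' -> tree_step w' w.
Proof. unfold tree_step; intros [h|[h|h]]; auto. Qed.
Lemma tree_step_leave r x w w' : tree_step w w' -> prefix (r ++ [x]) w -> ~ prefix (r ++ [x]) w' ->
  w = r ++ [x] /\ w' = r.
Proof. intros h h1 h2. apply tree_step_sym in h. destruct (tree_step_enter r x w' w h h2 h1); auto. Qed.

Lemma tree_step_enter_at q w w' : tree_step w w' -> ~ prefix q w -> prefix q w' -> w' = q.
Proof.
  intros [->|[[y ->]|[y ->]]] h1 h2.
  - contradiction.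
  - destruct (prefix_snoc _ _ _ h2) as [h|h]; [contradiction|auto].
  - exfalso. apply h1. eapply prefix_trans; eauto. apply prefix_app.
Qed.

Lemma tree_step_leave_at q w w' : tree_step w w' -> prefix q w -> ~ prefix q w' -> w = q.
Proof.
  intros [->|[[y ->]|[y ->]]] h1 h2.
  - contradiction.
  - exfalso. apply h2. eapply prefix_trans; eauto. apply prefix_app.
  - destruct (prefix_snoc _ _ _ h1) as [h|h]; [contradiction|auto].
Qed.

Section TreeWalk.
Variable f : nat -> list E.
Variable n : nat.
Hypothesis hf : forall k, k < n -> tree_step (f k) (f (S k)).

Lemma tree_walk_visits_geodesic q : on_geodesic (f 0) (f n) q -> exists j, j <= n /\ f j = q.
Proof.
  intros [hq hc].
  destruct (classic (prefix q (f 0))) as [h0|h0]; destruct (classic (prefix q (f n))) as [hn|hn].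
  -     destruct (classic (q = f 0)) as [e|e]; [exists 0; split; auto; lia|].
    pose (x := nth (length q) (f 0) e0).
    assert (hx : prefix (q ++ [x]) (f 0)) by (apply prefix_next; auto).
    assert (hxn : ~ prefix (q ++ [x]) (f n)).
    { intro h. apply (prefix_snoc_not q x). apply hc; auto. }
    destruct (discrete_ivt (fun k => prefix (q ++ [x]) (f k)) 0 n) as [k [hk [h1 h2]]]; auto; [lia|].
    destruct (tree_step_leave q x _ _ (hf k ltac:(lia)) h1 h2). exists (S k); split; auto; lia.
  - destruct (discrete_ivt (fun k => prefix q (f k)) 0 n) as [k [hk [h1 h2]]]; auto; [lia|].
    exists k. split; [lia|].
    eapply tree_step_leave_at; eauto. apply hf; lia.
  - destruct (discrete_ivt (fun k => ~ prefix q (f k)) 0 n) as [k [hk [h1 h2]]]; auto; [lia|].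
    apply NNPP in h2. exists (S k). split; [lia|].
    eapply tree_step_enter_at; eauto. apply hf; lia.
  - destruct hq; contradiction.
Qed.

Lemma off_geodesic_separated u v q : ~ on_geodesic u v q -> exists r x,
  (prefix (r ++ [x]) q /\ ~ prefix (r ++ [x]) u /\ ~ prefix (r ++ [x]) v) \/
  (~ prefix (r ++ [x]) q /\ prefix (r ++ [x]) u /\ prefix (r ++ [x]) v).
Proof.
  intros hng.
  destruct (classic (prefix q u \/ prefix q v)) as [hq|hq].
  - assert (exists c, prefix c u /\ prefix c v /\ ~ prefix c q) as [c [cu [cv cq]]].
    { apply NNPP; intro hno. apply hng. split; auto. intros c h1 h2.
      apply NNPP; intro h3. apply hno. eauto. }
    assert (hqc : prefix q c /\ q <> c).
    { destruct hq as [hq|hq].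
      - destruct (prefix_comparable q c u) as [h|h]; auto; [|contradiction].
        split; auto. intro; subst; apply cq, prefix_refl.
      - destruct (prefix_comparable q c v) as [h|h]; auto; [|contradiction].
        split; auto. intro; subst; apply cq, prefix_refl. }
    destruct hqc as [hqc hne].
    exists q, (nth (length q) c e0). right. pose proof (prefix_next q c hqc hne) as hn.
    repeat split.
    + apply prefix_snoc_not.
    + eapply prefix_trans; eauto.
    + eapply prefix_trans; eauto.
  - assert (Hgen : forall q', ~ prefix q' u -> ~ prefix q' v -> exists r x,
       prefix (r ++ [x]) q' /\ ~ prefix (r ++ [x]) u /\ ~ prefix (r ++ [x]) v).
    { intro q'. induction q' as [|z q' IH] using rev_ind; intros h1 h2.
      - exfalso; apply h1, prefix_nil.
      - destruct (classic (prefix q' u \/ prefix q' v)) as [hh|hh].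
        + exists q', z. repeat split; auto. apply prefix_refl.
        + destruct IH as [r [x [a [b c]]]]; [tauto|tauto|].
          exists r, x. repeat split; auto. eapply prefix_trans; eauto. apply prefix_app. }
    destruct (Hgen q) as [r [x h]]; [tauto|tauto|]. exists r, x. left; auto.
Qed.

Lemma tree_walk_on_geodesic :
  (forall k1 k2 r x, k1 < k2 -> k2 < n ->
     (f k1 = r /\ f (S k1) = r ++ [x] /\ f k2 = r ++ [x] /\ f (S k2) = r) \/
     (f k1 = r ++ [x] /\ f (S k1) = r /\ f k2 = r /\ f (S k2) = r ++ [x]) -> False) ->
  forall k, k <= n -> on_geodesic (f 0) (f n) (f k).
Proof.
  intros HB k hk. apply NNPP; intro hng.
  destruct (off_geodesic_separated _ _ _ hng) as [r [x [[a [b c]]|[a [b c]]]]].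
  - destruct (discrete_ivt (fun j => ~ prefix (r ++ [x]) (f j)) 0 k) as [k1 [hk1 [e1 e2]]]; auto; [lia|].
    apply NNPP in e2.
    destruct (discrete_ivt (fun j => prefix (r ++ [x]) (f j)) k n) as [k2 [hk2 [e3 e4]]]; auto.
    destruct (tree_step_enter _ _ _ _ (hf k1 ltac:(lia)) e1 e2).
    destruct (tree_step_leave _ _ _ _ (hf k2 ltac:(lia)) e3 e4).
    apply (HB k1 k2 r x); [lia|lia|]. left; auto.
  - destruct (discrete_ivt (fun j => prefix (r ++ [x]) (f j)) 0 k) as [k1 [hk1 [e1 e2]]]; auto; [lia|].
    destruct (discrete_ivt (fun j => ~ prefix (r ++ [x]) (f j)) k n) as [k2 [hk2 [e3 e4]]]; auto.
    apply NNPP in e4.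
    destruct (tree_step_leave _ _ _ _ (hf k1 ltac:(lia)) e1 e2).
    destruct (tree_step_enter _ _ _ _ (hf k2 ltac:(lia)) e3 e4).
    apply (HB k1 k2 r x); [lia|lia|]. right; auto.
Qed.
End TreeWalk.

(* The first edge from v towards a: [None] if v = a, [Some None] towards the
   parent, [Some (Some x)] towards the child v ++ [x]. *)
Definition tree_dir (v a : list E) : option (option E) :=
  if excluded_middle_informative (v = a) then None
  else if excluded_middle_informative (prefix v a) then Some (Some (nth (length v) a e0))
  else Some None.

Lemma tree_dir_None v a : tree_dir v a = None <-> v = a.
Proof.
  unfold tree_dir. destruct (excluded_middle_informative (v = a)); [tauto|].
  destruct (excluded_middle_informative (prefix v a)); split; intro; congruence.
Qed.
Lemma tree_dir_parent v a : v <> a -> ~ prefix v a -> tree_dir v a = Some None.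
Proof.
  intros h1 h2. unfold tree_dir. destruct (excluded_middle_informative (v = a)); [tauto|].
  destruct (excluded_middle_informative (prefix v a)); tauto.
Qed.
Lemma tree_dir_child v a x : prefix (v ++ [x]) a -> tree_dir v a = Some (Some x).
Proof.
  intros h. unfold tree_dir. destruct (excluded_middle_informative (v = a)).
  { subst. exfalso; eapply prefix_snoc_not; eauto. }
  destruct (excluded_middle_informative (prefix v a)).
  - f_equal; f_equal. apply prefix_snoc_nth; auto.
  - exfalso. apply n0. eapply prefix_trans; [apply prefix_app|eauto].
Qed.
Lemma tree_dir_cases v a : v = a \/ (v <> a /\ ~ prefix v a /\ tree_dir v a = Some None) \/
  (exists x, prefix (v ++ [x]) a /\ tree_dir v a = Some (Some x)).
Proof.
  destruct (classic (v = a)) as [h|h]; auto.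
  destruct (classic (prefix v a)) as [h2|h2].
  - right; right. exists (nth (length v) a e0). split; [apply prefix_next; auto|].
    apply tree_dir_child, prefix_next; auto.
  - right; left. repeat split; auto. apply tree_dir_parent; auto.
Qed.

Lemma on_geodesic_dir a b v : on_geodesic a b v <-> (v = a \/ v = b \/ tree_dir v a <> tree_dir v b).
Proof.
  split.
  - intros [h1 h2]. destruct (classic (v = a)); auto. destruct (classic (v = b)); auto.
    right; right. intro he.
    destruct (tree_dir_cases v a) as [?|[[_ [na da]]|[x [pa da]]]]; [contradiction| |].
    + destruct (tree_dir_cases v b) as [?|[[_ [nb db]]|[y [pb db]]]]; [contradiction| |congruence].
      destruct h1; contradiction.
    + destruct (tree_dir_cases v b) as [?|[[_ [nb db]]|[y [pb db]]]]; [contradiction|congruence|].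
      rewrite da, db in he. injection he as <-.
      apply (prefix_snoc_not v x). apply h2; auto.
  - intros [->|[->|hd]]; [apply on_geodesic_l|apply on_geodesic_r|].
    destruct (tree_dir_cases v a) as [->|[[na [nna da]]|[x [pa da]]]].
    + apply on_geodesic_l.
    + destruct (tree_dir_cases v b) as [->|[[nb [nnb db]]|[y [pb db]]]]; [apply on_geodesic_r|congruence|].
      assert (pvb : prefix v b) by (eapply prefix_trans; [apply prefix_app|eauto]).
      split; auto. intros c ca cb.
      destruct (prefix_comparable c v b) as [h|h]; auto.
      exfalso; apply nna. eapply prefix_trans; eauto.
    + assert (pva : prefix v a) by (eapply prefix_trans; [apply prefix_app|eauto]).
      split; auto. intros c ca cb.
      destruct (prefix_comparable c v a) as [h|h]; auto.
      destruct (classic (c = v)) as [->|cne]; [apply prefix_refl|].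
      exfalso.
      assert (hvc : prefix (v ++ [nth (length v) c e0]) c) by (apply prefix_next; auto).
      rewrite (tree_dir_child v a (nth (length v) c e0)) in hd; [|eapply prefix_trans; eauto].
      rewrite (tree_dir_child v b (nth (length v) c e0)) in hd; [|eapply prefix_trans; eauto].
      auto.
Qed.

Lemma on_geodesic_tripod X Y Z v : on_geodesic X Y v ->
  (on_geodesic Z X v /\ tree_dir v Y = tree_dir v Z /\ tree_dir v Y <> None) \/
  (on_geodesic Y Z v /\ tree_dir v X = tree_dir v Z /\ tree_dir v X <> None) \/
  (on_geodesic Y Z v /\ on_geodesic Z X v).
Proof.
  intro h. apply on_geodesic_dir in h.
  destruct (classic (tree_dir v Y = tree_dir v Z /\ tree_dir v Y <> None)) as [[e1 e2]|n1].
  { left. split; auto. apply on_geodesic_dir.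
    destruct h as [h|[h|h]]; auto.
    - apply tree_dir_None in h. congruence.
    - right; right. congruence. }
  destruct (classic (tree_dir v X = tree_dir v Z /\ tree_dir v X <> None)) as [[e1 e2]|n2].
  { right; left. split; auto. apply on_geodesic_dir.
    destruct h as [h|[h|h]]; auto.
    - apply tree_dir_None in h. congruence.
    - right; right. congruence. }
  right; right. split; apply on_geodesic_dir.
  - destruct (classic (tree_dir v Y = tree_dir v Z)) as [e|e]; auto.
    left. apply tree_dir_None. apply NNPP; intro; apply n1; split; auto.
  - destruct (classic (tree_dir v Z = tree_dir v X)) as [e|e]; auto.
    right; left. apply tree_dir_None. apply NNPP; intro; apply n2; split; auto.
Qed.

Lemma on_geodesic_triangle X Y Z v : on_geodesic X Y v -> on_geodesic Y Z v \/ on_geodesic Z X v.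
Proof. intro h. destruct (on_geodesic_tripod X Y Z v h) as [[h1 _]|[[h1 _]|[h1 _]]]; auto. Qed.

Lemma tree_adj_toward_unique a b v u u' :
  tree_adj u v -> on_geodesic a v u -> tree_adj u' v -> on_geodesic b v u' ->
  tree_dir v a = tree_dir v b -> u = u'.
Proof.
  intros ha hu hb hu' hd.
  assert (Hd : forall c w, tree_adj w v -> on_geodesic c v w ->
            (exists y, w = v ++ [y] /\ tree_dir v c = Some (Some y)) \/
            (exists y, v = w ++ [y] /\ tree_dir v c = Some None)).
  { intros c w [[y ->]|[y ->]] [h1 h2].
    - left. exists y. split; auto. apply tree_dir_child.
      destruct h1 as [h1|h1]; auto. exfalso; eapply prefix_snoc_not; eauto.
    - right. exists y. split; auto. apply tree_dir_parent.
      + intro ee. subst c. apply (prefix_snoc_not w y). apply h2; [apply prefix_refl|apply prefix_refl].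
      + intro hp. apply (prefix_snoc_not w y). apply h2; auto. apply prefix_refl. }
  destruct (Hd a u ha hu) as [[y [-> d1]]|[y [e1 d1]]];
  destruct (Hd b u' hb hu') as [[y' [-> d2]]|[y' [e2 d2]]]; try congruence.
  rewrite e1 in e2. apply app_inj_tail in e2. tauto.
Qed.

Lemma tree_step_adj u v : tree_step u v -> u <> v -> tree_adj u v.
Proof. intros [h|[[y h]|[y h]]] hne; [contradiction|right|left]; eauto. Qed.

Lemma tree_adj_neq u v : tree_adj u v -> u <> v.
Proof.
  intros [[y ->]|[y ->]] e; apply (f_equal (@length E)) in e;
    rewrite length_app in e; simpl in e; lia.
Qed.

Lemma snoc_neq (r : list E) x : r <> r ++ [x].
Proof. intro e. apply (f_equal (@length E)) in e. rewrite length_app in e. simpl in e. lia. Qed.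

End WordTree.


(** * Thin polygons and trees of spaces *)

Definition thin {K : group} (SH : K -> Prop) (delta : nat) : Prop :=
  forall (x y z : K) (n1 n2 n3 : nat) (p1 p2 p3 : nat -> K),
    is_geodesic SH n1 p1 x y -> is_geodesic SH n2 p2 y z -> is_geodesic SH n3 p3 z x ->
    forall k, k <= n1 ->
      exists j, (j <= n2 /\ dist_le SH delta (p1 k) (p2 j)) \/
                (j <= n3 /\ dist_le SH delta (p1 k) (p3 j)).

Section ThinPolygons.
Context {K : group} (SH : K -> Prop) (d : nat) (thinS : thin SH d)
  (conn : forall u w, exists n, walk SH n u w).

Lemma geodesic_ex u w : exists n p, is_geodesic SH n p u w.
Proof. apply geodesic_exists, conn. Qed.

Lemma geodesic_len_le1 n p u w : is_geodesic SH n p u w -> dist_le SH 1 u w -> n <= 1.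
Proof. intros [_ hmin] [m [hm wm]]. apply hmin in wm. lia. Qed.

Lemma geodesic_start_dist_le n p u w j : is_geodesic SH n p u w -> j <= n -> dist_le SH j u (p j).
Proof. intros hg hj. eapply path_dist_le; eauto. apply geodesic_path in hg; eauto. Qed.

Lemma thin_quadrilateral l1 s e1 f1 l2 s' e2 f2 :
  is_geodesic SH l1 s e1 f1 -> is_geodesic SH l2 s' e2 f2 ->
  dist_le SH 1 e1 f2 -> dist_le SH 1 f1 e2 ->
  forall k, k <= l1 -> exists j, j <= l2 /\ dist_le SH (2 * d + 1) (s k) (s' j).
Proof.
  intros g1 g2 d1 d2 k hk.
  destruct (geodesic_ex f1 f2) as [mb [b gb]].
  destruct (geodesic_ex f2 e1) as [mc [c gc]].
  assert (hmc : mc <= 1) by (eapply geodesic_len_le1; eauto; apply dist_le_sym; auto).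
  destruct (thinS _ _ _ _ _ _ _ _ _ g1 gb gc k hk) as [j [[hj dj]|[hj dj]]].
  - destruct (geodesic_ex e2 f1) as [mc' [c' gc']].
    assert (hmc' : mc' <= 1) by (eapply geodesic_len_le1; eauto; apply dist_le_sym; auto).
    pose proof (geodesic_rev _ _ _ _ _ g2) as g2r.
    destruct (thinS _ _ _ _ _ _ _ _ _ gb g2r gc' j hj) as [j' [[hj' dj']|[hj' dj']]].
    + exists (l2 - j'). split; [lia|]. eapply dist_le_mono; [|eapply dist_le_trans; eauto]. lia.
    + exists 0. split; [lia|].
      assert (e : s' 0 = e2) by (destruct g2 as [[h0 _] _]; auto).
      rewrite e. pose proof (geodesic_start_dist_le _ _ _ _ j' gc' hj') as dn.
      eapply dist_le_mono;
        [|eapply dist_le_trans; [eauto|eapply dist_le_trans; [eauto|apply dist_le_sym; eauto]]].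
      lia.
  - exists l2. split; [lia|].
    assert (e : s' l2 = f2) by (destruct g2 as [[_ [h1 _]] _]; auto).
    rewrite e. pose proof (geodesic_start_dist_le _ _ _ _ j gc hj) as dn.
    eapply dist_le_mono; [|eapply dist_le_trans; [eauto|apply dist_le_sym; eauto]]. lia.
Qed.

Lemma thin_hexagon l1 s1 e1 f1 l2 s2 e2 f2 l3 s3 e3 f3 :
  is_geodesic SH l1 s1 e1 f1 -> is_geodesic SH l2 s2 e2 f2 -> is_geodesic SH l3 s3 e3 f3 ->
  dist_le SH 1 f1 e2 -> dist_le SH 1 f2 e3 -> dist_le SH 1 f3 e1 ->
  forall k, k <= l1 -> exists j, (j <= l2 /\ dist_le SH (5 * d + 2) (s1 k) (s2 j)) \/
                               (j <= l3 /\ dist_le SH (5 * d + 2) (s1 k) (s3 j)).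
Proof.
  intros g1 g2 g3 d12 d23 d31 k hk.
  assert (s2_0 : s2 0 = e2) by (destruct g2 as [[h0 _] _]; auto).
  assert (s3_l : s3 l3 = f3) by (destruct g3 as [[_ [h1 _]] _]; auto).
  destruct (geodesic_ex f1 f3) as [ma [a ga]].
  destruct (geodesic_ex f3 e1) as [mc [c gc]].
  assert (hmc : mc <= 1) by (eapply geodesic_len_le1; eauto).
  destruct (thinS _ _ _ _ _ _ _ _ _ g1 ga gc k hk) as [j [[hj dj]|[hj dj]]].
  2:{ exists l3. right. split; [lia|]. rewrite s3_l.
      pose proof (geodesic_start_dist_le _ _ _ _ j gc hj) as dn.
      eapply dist_le_mono; [|eapply dist_le_trans; [eauto|apply dist_le_sym; eauto]]. lia. }
  destruct (geodesic_ex f3 e2) as [mz [z gz]].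
  destruct (geodesic_ex e2 f1) as [mc2 [c2 gc2]].
  assert (hmc2 : mc2 <= 1) by (eapply geodesic_len_le1; eauto; apply dist_le_sym; auto).
  destruct (thinS _ _ _ _ _ _ _ _ _ ga gz gc2 j hj) as [j' [[hj' dj']|[hj' dj']]].
  2:{ exists 0. left. split; [lia|]. rewrite s2_0.
      pose proof (geodesic_start_dist_le _ _ _ _ j' gc2 hj') as dn.
      eapply dist_le_mono;
        [|eapply dist_le_trans; [eauto|eapply dist_le_trans; [eauto|apply dist_le_sym; eauto]]].
      lia. }
  destruct (geodesic_ex f2 f3) as [me [eta ge]].
  destruct (thinS _ _ _ _ _ _ _ _ _ gz g2 ge j' hj') as [j'' [[hj'' dj'']|[hj'' dj'']]].
  - exists j''. left. split; auto.
    eapply dist_le_mono; [|eapply dist_le_trans; [eauto|eapply dist_le_trans; eauto]]. lia.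
  - pose proof (geodesic_rev _ _ _ _ _ g3) as g3r.
    destruct (thin_quadrilateral _ _ _ _ _ _ _ _ ge g3r d23 (dist_le_eq _ _ _ _ eq_refl) j'' hj'')
      as [j3 [hj3 dj3]].
    exists (l3 - j3). right. split; [lia|].
    eapply dist_le_mono;
      [|eapply dist_le_trans; [eauto|eapply dist_le_trans; [eauto|eapply dist_le_trans; eauto]]].
    lia.
Qed.
End ThinPolygons.

Section TreeProjection.
Context {G : group} (Sg : G -> Prop) {E : Type} (e0 : E) (pi : G -> list E).
Hypothesis pi_adj : forall g g', cay_adj Sg g g' -> tree_step (pi g) (pi g').

Lemma path_visits_geodesic n p x y q : is_path Sg n p x y -> on_geodesic (pi x) (pi y) q ->
  exists j, j <= n /\ pi (p j) = q.
Proof.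
  intros [h0 [h1 h]] hq. subst x y.
  apply (tree_walk_visits_geodesic e0 (fun k => pi (p k)) n); auto.
Qed.

Section EdgeLifts.
Hypothesis edge_lifts_close : forall g1 g1' g2 g2' r x,
  cay_adj Sg g1 g1' -> cay_adj Sg g2 g2' ->
  pi g1 = r -> pi g2 = r -> pi g1' = r ++ [x] -> pi g2' = r ++ [x] ->
  dist_le Sg 1 g1 g2 /\ dist_le Sg 1 g1' g2'.

(* Crossing a tree edge and later crossing it back would give two points at
   distance 1 that are far apart along the geodesic. *)
Lemma geodesic_on_geodesic n p x y k : is_geodesic Sg n p x y -> k <= n ->
  on_geodesic (pi x) (pi y) (pi (p k)).
Proof.
  intros hg hk. pose proof (geodesic_path _ _ _ _ _ hg) as [h0 [h1 h]].
  rewrite <- h0, <- h1.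
  apply (tree_walk_on_geodesic e0 (fun k => pi (p k)) n); auto.
  intros k1 k2 r x0 hk12 hk2n back.
  assert (a1 : cay_adj Sg (p k1) (p (S k1))) by (apply h; lia).
  assert (a2 : cay_adj Sg (p k2) (p (S k2))) by (apply h; lia).
  assert (short : dist_le Sg 1 (p k1) (p (S k2))).
  { destruct back as [[e1 [e2 [e3 e4]]]|[e1 [e2 [e3 e4]]]].
    - apply (edge_lifts_close _ _ _ _ r x0 a1 (cay_adj_sym _ _ _ a2)); auto.
    - apply (edge_lifts_close _ _ _ _ r x0 (cay_adj_sym _ _ _ a1) a2); auto. }
  pose proof (geodesic_dist_le _ _ _ _ _ k1 (S k2) _ hg ltac:(lia) short). lia.
Qed.

Section HyperbolicFibers.
Context {H : group} (SH : H -> Prop) (coord : G -> H) (dH : nat) (thinH : thin SH dH)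
  (connH : forall u w, exists n, walk SH n u w).
Hypothesis fiber_dist_le : forall g g' k, pi g = pi g' ->
  dist_le SH k (coord g) (coord g') -> dist_le Sg k g g'.
Hypothesis fiber_adj : forall g g', pi g = pi g' ->
  cay_adj Sg g g' -> cay_adj SH (coord g) (coord g').

Definition is_block (p : nat -> G) n v a b :=
  a <= b /\ b <= n /\ (forall j, a <= j <= b -> pi (p j) = v) /\
  (a = 0 \/ pi (p (a - 1)) <> v) /\ (b = n \/ pi (p (S b)) <> v).

Lemma block_exists p n k : k <= n -> exists a b, a <= k <= b /\ is_block p n (pi (p k)) a b.
Proof.
  intro hk.
  destruct (maximal_constant_block (fun j => pi (p j)) n k hk) as [a [b [h1 [h2 [h3 [h4 h5]]]]]].
  exists a, b. split; auto. repeat split; auto; lia.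
Qed.

Lemma block_entry n p x y v a b : is_geodesic Sg n p x y -> is_block p n v a b -> 0 < a ->
  tree_adj (pi (p (a - 1))) v /\ on_geodesic (pi x) v (pi (p (a - 1))).
Proof.
  intros hg [hab [hbn [hin [ha hb]]]] ha0.
  destruct ha as [ha|ha]; [lia|].
  pose proof (geodesic_path _ _ _ _ _ hg) as [h0 [h1 h]].
  split.
  - apply tree_step_adj; auto. rewrite <- (hin a) by lia. apply pi_adj.
    replace a with (S (a - 1)) at 2 by lia. apply h. lia.
  - pose proof (geodesic_on_geodesic _ _ _ _ (a - 1) (geodesic_sub _ _ _ _ _ 0 a hg ltac:(lia))
      ltac:(lia)) as o.
    simpl in o. rewrite h0, (hin a) in o by lia. auto.
Qed.

Lemma block_exit n p x y v a b : is_geodesic Sg n p x y -> is_block p n v a b -> b < n ->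
  tree_adj (pi (p (S b))) v /\ on_geodesic (pi y) v (pi (p (S b))).
Proof.
  intros hg [hab [hbn [hin [ha hb]]]] hbn'.
  destruct hb as [hb|hb]; [lia|].
  pose proof (geodesic_path _ _ _ _ _ hg) as [h0 [h1 h]].
  split.
  - apply tree_step_adj; auto. rewrite <- (hin b) by lia. apply tree_step_sym, pi_adj, h. lia.
  - pose proof (geodesic_on_geodesic _ _ _ _ 1 (geodesic_sub _ _ _ _ _ b n hg ltac:(lia))
      ltac:(lia)) as o.
    rewrite h1, (hin b) in o by lia. replace (b + 1) with (S b) in o by lia.
    apply on_geodesic_sym; exact o.
Qed.

Lemma block_start n p x y v a b : is_geodesic Sg n p x y -> is_block p n v a b ->
  (a = 0 <-> v = pi x).
Proof.
  intros hg hB. pose proof hB as [hab [hbn [hin _]]].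
  pose proof (geodesic_path _ _ _ _ _ hg) as [h0 _].
  split.
  - intros ->. rewrite <- h0. symmetry. apply hin. lia.
  - intro e. destruct (Nat.eq_dec a 0) as [|ne]; auto. exfalso.
    destruct (block_entry _ _ _ _ _ _ _ hg hB ltac:(lia)) as [ta o]. rewrite <- e in o.
    apply on_geodesic_same in o. apply (tree_adj_neq _ _ ta o).
Qed.

Lemma block_end n p x y v a b : is_geodesic Sg n p x y -> is_block p n v a b ->
  (b = n <-> v = pi y).
Proof.
  intros hg hB. pose proof hB as [hab [hbn [hin _]]].
  pose proof (geodesic_path _ _ _ _ _ hg) as [_ [h1 _]].
  split.
  - intros ->. rewrite <- h1. symmetry. apply hin. lia.
  - intro e. destruct (Nat.eq_dec b n) as [|ne]; auto. exfalso.
    destruct (block_exit _ _ _ _ _ _ _ hg hB ltac:(lia)) as [ta o]. rewrite <- e in o.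
    apply on_geodesic_same in o. apply (tree_adj_neq _ _ ta o).
Qed.

Definition same_branch v g g' :=
  g = g' \/ (tree_dir e0 v (pi g) = tree_dir e0 v (pi g') /\ tree_dir e0 v (pi g) <> None).

(* Both geodesics pass from v into the same branch of the tree, hence through the
   same tree edge, and the two lifts of that edge are 1-close. *)
Lemma block_ends_close n p x y m q x' y' v a b a' b' :
  is_geodesic Sg n p x y -> is_block p n v a b ->
  is_geodesic Sg m q x' y' -> is_block q m v a' b' ->
  same_branch v x y' -> dist_le Sg 1 (p a) (q b').
Proof.
  intros gp bp gq bq hc.
  pose proof (block_start _ _ _ _ _ _ _ gp bp) as st.
  pose proof (block_end _ _ _ _ _ _ _ gq bq) as en.
  pose proof (geodesic_path _ _ _ _ _ gp) as [p0 [_ hpp]].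
  pose proof (geodesic_path _ _ _ _ _ gq) as [_ [q1 hqq]].
  pose proof bp as [hab [hbn [inp _]]]. pose proof bq as [hab' [hbm [inq _]]].
  destruct (Nat.eq_dec a 0) as [ea|na]; destruct (Nat.eq_dec b' m) as [eb|nb].
  - subst a b'. rewrite p0, q1. destruct hc as [->|[hd hn]].
    + apply dist_le_eq; auto.
    + exfalso. apply hn, tree_dir_None, st. auto.
  - exfalso. assert (v = pi x) by (apply st; auto).
    destruct hc as [->|[hd hn]]; [apply nb, en; auto|apply hn, tree_dir_None; auto].
  - exfalso. assert (v = pi y') by (apply en; auto).
    destruct hc as [->|[hd hn]]; [apply na, st; auto|apply hn; rewrite hd; apply tree_dir_None; auto].
  - destruct (block_entry _ _ _ _ _ _ _ gp bp ltac:(lia)) as [ta oa].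
    destruct (block_exit _ _ _ _ _ _ _ gq bq ltac:(lia)) as [tb ob].
    assert (hd : tree_dir e0 v (pi x) = tree_dir e0 v (pi y'))
      by (destruct hc as [->|[hd _]]; auto).
    pose proof (tree_adj_toward_unique e0 _ _ _ _ _ ta oa tb ob hd) as eu.
    assert (adj1 : cay_adj Sg (p (a - 1)) (p a)).
    { replace a with (S (a - 1)) at 2 by lia. apply hpp. lia. }
    assert (adj2 : cay_adj Sg (q b') (q (S b'))) by (apply hqq; lia).
    assert (epa : pi (p a) = v) by (apply inp; lia).
    assert (eqb : pi (q b') = v) by (apply inq; lia).
    destruct ta as [[y0 e1]|[y0 e1]].
    + apply (edge_lifts_close _ _ _ _ v y0 (cay_adj_sym _ _ _ adj1) adj2); congruence.
    + apply (edge_lifts_close _ _ _ _ (pi (p (a - 1))) y0 adj1 (cay_adj_sym _ _ _ adj2));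
        congruence.
Qed.

Lemma fiber_dist_le1 g g' : pi g = pi g' -> dist_le Sg 1 g g' ->
  dist_le SH 1 (coord g) (coord g').
Proof.
  intros e [m [hm w]]. destruct m as [|[|m]]; [| |lia].
  - apply walk0_eq in w. subst. apply dist_le_eq. auto.
  - apply dist_le_adj, fiber_adj, walk1_adj; auto.
Qed.

Lemma block_fiber_geodesic n p x y v a b : is_geodesic Sg n p x y -> is_block p n v a b ->
  is_geodesic SH (b - a) (fun j => coord (p (a + j))) (coord (p a)) (coord (p b)).
Proof.
  intros hg [hab [hbn [hin _]]]. pose proof (geodesic_path _ _ _ _ _ hg) as [h0 [h1 h]].
  split; [repeat split|].
  - rewrite Nat.add_0_r. auto.
  - do 2 f_equal. lia.
  - intros k hk. replace (a + S k) with (S (a + k)) by lia.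
    apply fiber_adj; [rewrite !hin by lia; auto|]. apply h. lia.
  - intros m wm. apply dist_le_walk, fiber_dist_le in wm; [|rewrite !hin by lia; auto].
    eapply geodesic_dist_le; eauto.
Qed.

Lemma block_dist_le p n v a b q m a' b' k j c :
  is_block p n v a b -> is_block q m v a' b' -> a <= k <= b -> a' <= j <= b' ->
  dist_le SH c (coord (p k)) (coord (q j)) -> dist_le Sg c (p k) (q j).
Proof.
  intros [_ [_ [inp _]]] [_ [_ [inq _]]] hk hj. apply fiber_dist_le.
  rewrite inp, inq by lia. auto.
Qed.

Lemma block_of_on_geodesic m q x' y' v : is_geodesic Sg m q x' y' ->
  on_geodesic (pi x') (pi y') v -> exists a' b', is_block q m v a' b'.
Proof.
  intros gq hv.
  destruct (path_visits_geodesic _ _ _ _ _ (geodesic_path _ _ _ _ _ gq) hv) as [j [hj <-]].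
  destruct (block_exists q m j hj) as [a' [b' [_ B]]]. eauto.
Qed.

Lemma block_near_block n p x y m q x' y' v a b a' b' k :
  is_geodesic Sg n p x y -> is_block p n v a b ->
  is_geodesic Sg m q x' y' -> is_block q m v a' b' ->
  same_branch v x y' -> same_branch v x' y -> a <= k <= b ->
  exists j, j <= m /\ dist_le Sg (2 * dH + 1) (p k) (q j).
Proof.
  intros gp bp gq bq hx hy hk.
  pose proof bp as [hab [_ [inp _]]]. pose proof bq as [hab' [hbm [inq _]]].
  assert (c1 : dist_le SH 1 (coord (p a)) (coord (q b'))).
  { apply fiber_dist_le1; [rewrite inp, inq by lia; auto|].
    eapply block_ends_close; eauto. }
  assert (c2 : dist_le SH 1 (coord (p b)) (coord (q a'))).
  { apply dist_le_sym, fiber_dist_le1; [rewrite inp, inq by lia; auto|].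
    eapply block_ends_close; eauto. }
  destruct (thin_quadrilateral SH dH thinH connH _ _ _ _ _ _ _ _
    (block_fiber_geodesic _ _ _ _ _ _ _ gp bp) (block_fiber_geodesic _ _ _ _ _ _ _ gq bq)
    c1 c2 (k - a) ltac:(lia)) as [j [hj dj]].
  replace (a + (k - a)) with k in dj by lia.
  exists (a' + j). split; [lia|]. eapply block_dist_le; eauto; lia.
Qed.

Lemma block_near_blocks n1 n2 n3 p1 p2 p3 x y z v a1 b1 a2 b2 a3 b3 k :
  is_geodesic Sg n1 p1 x y -> is_geodesic Sg n2 p2 y z -> is_geodesic Sg n3 p3 z x ->
  is_block p1 n1 v a1 b1 -> is_block p2 n2 v a2 b2 -> is_block p3 n3 v a3 b3 -> a1 <= k <= b1 ->
  exists j, (j <= n2 /\ dist_le Sg (5 * dH + 2) (p1 k) (p2 j)) \/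
            (j <= n3 /\ dist_le Sg (5 * dH + 2) (p1 k) (p3 j)).
Proof.
  intros g1 g2 g3 B1 B2 B3 hk.
  pose proof B1 as [h1 [_ [in1 _]]]. pose proof B2 as [h2 [hb2 [in2 _]]].
  pose proof B3 as [h3 [hb3 [in3 _]]].
  assert (c12 : dist_le SH 1 (coord (p1 b1)) (coord (p2 a2))).
  { apply dist_le_sym, fiber_dist_le1; [rewrite in1, in2 by lia; auto|].
    apply (block_ends_close _ _ _ _ _ _ _ _ _ _ _ _ _ g2 B2 g1 B1); left; auto. }
  assert (c23 : dist_le SH 1 (coord (p2 b2)) (coord (p3 a3))).
  { apply dist_le_sym, fiber_dist_le1; [rewrite in2, in3 by lia; auto|].
    apply (block_ends_close _ _ _ _ _ _ _ _ _ _ _ _ _ g3 B3 g2 B2); left; auto. }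
  assert (c31 : dist_le SH 1 (coord (p3 b3)) (coord (p1 a1))).
  { apply dist_le_sym, fiber_dist_le1; [rewrite in1, in3 by lia; auto|].
    apply (block_ends_close _ _ _ _ _ _ _ _ _ _ _ _ _ g1 B1 g3 B3); left; auto. }
  destruct (thin_hexagon SH dH thinH connH _ _ _ _ _ _ _ _ _ _ _ _
    (block_fiber_geodesic _ _ _ _ _ _ _ g1 B1) (block_fiber_geodesic _ _ _ _ _ _ _ g2 B2)
    (block_fiber_geodesic _ _ _ _ _ _ _ g3 B3) c12 c23 c31 (k - a1) ltac:(lia))
    as [j [[hj dj]|[hj dj]]]; replace (a1 + (k - a1)) with k in dj by lia.
  - exists (a2 + j). left. split; [lia|]. eapply block_dist_le; eauto; lia.
  - exists (a3 + j). right. split; [lia|]. eapply block_dist_le; eauto; lia.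
Qed.

(* A point of a triangle side lies over a tree vertex v; the sides passing
   through v have blocks over v, and the fibre over v is hyperbolic. *)
Lemma thin_of_hyperbolic_fibers : thin Sg (5 * dH + 2).
Proof.
  intros x y z n1 n2 n3 p1 p2 p3 g1 g2 g3 k hk.
  pose proof (geodesic_on_geodesic _ _ _ _ k g1 hk) as hv.
  destruct (block_exists p1 n1 k hk) as [a1 [b1 [hk1 B1]]].
  destruct (on_geodesic_tripod e0 (pi x) (pi y) (pi z) _ hv)
    as [[o [hd hn]]|[[o [hd hn]]|[o o']]].
  - destruct (block_of_on_geodesic _ _ _ _ _ g3 o) as [a3 [b3 B3]].
    destruct (block_near_block _ _ _ _ _ _ _ _ _ _ _ _ _ k g1 B1 g3 B3) as [j [hj dj]];
      [left; auto|right; split; congruence|lia|].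
    exists j. right. split; auto. eapply dist_le_mono; [|exact dj]. lia.
  - destruct (block_of_on_geodesic _ _ _ _ _ g2 o) as [a2 [b2 B2]].
    destruct (block_near_block _ _ _ _ _ _ _ _ _ _ _ _ _ k g1 B1 g2 B2) as [j [hj dj]];
      [right; split; auto|left; auto|lia|].
    exists j. left. split; auto. eapply dist_le_mono; [|exact dj]. lia.
  - destruct (block_of_on_geodesic _ _ _ _ _ g2 o) as [a2 [b2 B2]].
    destruct (block_of_on_geodesic _ _ _ _ _ g3 o') as [a3 [b3 B3]].
    apply (block_near_blocks _ _ _ _ _ _ _ _ _ _ _ _ _ _ _ _ _ g1 g2 g3 B1 B2 B3). lia.
Qed.

End HyperbolicFibers.
End EdgeLifts.

Lemma thin_of_small_fibers : (forall g g', pi g = pi g' -> dist_le Sg 1 g g') -> thin Sg 1.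
Proof.
  intros small x y z n1 n2 n3 p1 p2 p3 g1 g2 g3 k hk.
  assert (lifts : forall g1 g1' g2 g2' r x, cay_adj Sg g1 g1' -> cay_adj Sg g2 g2' ->
    pi g1 = r -> pi g2 = r -> pi g1' = r ++ [x] -> pi g2' = r ++ [x] ->
    dist_le Sg 1 g1 g2 /\ dist_le Sg 1 g1' g2').
  { intros. split; apply small; congruence. }
  pose proof (geodesic_on_geodesic lifts _ _ _ _ k g1 hk) as hv.
  destruct (on_geodesic_triangle e0 _ _ (pi z) _ hv) as [hv'|hv'].
  - destruct (path_visits_geodesic _ _ _ _ _ (geodesic_path _ _ _ _ _ g2) hv') as [j [hj ej]].
    exists j. left. split; [exact hj|apply small; auto].
  - destruct (path_visits_geodesic _ _ _ _ _ (geodesic_path _ _ _ _ _ g3) hv') as [j [hj ej]].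
    exists j. right. split; [exact hj|apply small; auto].
Qed.

End TreeProjection.

(** * The Morse lemma *)

Lemma sq_le_pow2 m : 4 <= m -> m * m <= 2 ^ m.
Proof.
  intro hm. induction hm as [|m hm IH]; [simpl; lia|].
  rewrite Nat.pow_succ_r'. nia.
Qed.

Lemma pow2_le_linear m a : 2 ^ m <= a * m + a -> m <= 2 * a + 4.
Proof.
  intro h. destruct (Nat.lt_ge_cases m 4) as [hm|hm]; [lia|].
  pose proof (sq_le_pow2 m hm). nia.
Qed.

Definition morse_const (d lam : nat) := d * (2 * (2 * (6 * lam + 2) * (d + 1)) + 4) + 1.

(* With m the least exponent such that Q * D <= 2 ^ m, the hypothesis gives
   2 ^ m <= 2 * Q * (d * m + 1), which bounds m and hence D. *)
Lemma log_bound d lam D :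
  (forall m, (6 * lam + 2) * D <= 2 ^ m -> D <= d * m + 1) -> D <= morse_const d lam.
Proof.
  intro h. set (Q := 6 * lam + 2).
  destruct (ex_minimal (fun m => Q * D <= 2 ^ m)) as [m [hm mmin]].
  { exists (Q * D). apply Nat.lt_le_incl, Nat.pow_gt_lin_r. lia. }
  pose proof (h m hm) as HD. unfold morse_const. fold Q.
  destruct (Nat.eq_dec m 0) as [->|m0]; [lia|].
  assert (hm1 : 2 ^ (m - 1) < Q * D).
  { apply NNPP. intro hh. assert (m <= m - 1) by (apply mmin; lia). lia. }
  assert (h2m : 2 ^ m <= 2 * Q * (d + 1) * m + 2 * Q * (d + 1)).
  { replace m with (S (m - 1)) at 1 by lia. rewrite Nat.pow_succ_r'.
    pose proof (Nat.mul_le_mono_l D (d * m + 1) Q HD). lia. }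
  apply pow2_le_linear in h2m. pose proof (Nat.mul_le_mono_l _ _ d h2m). lia.
Qed.

Section Morse.
Context {K : group} (Sg : K -> Prop) (d : nat) (thinS : thin Sg d)
  (conn : forall u w, exists n, walk Sg n u w).

Lemma geodesic_near_short_path n c u w L gam j : is_path Sg n c u w -> n <= 1 ->
  is_geodesic Sg L gam u w -> j <= L -> exists s, s <= n /\ gam j = c s.
Proof.
  intros hc hn [[g0 [g1 _]] hmin] hj.
  assert (hL : L <= n) by (apply hmin; exists c; auto).
  destruct hc as [c0 [c1 _]].
  destruct (Nat.eq_dec j 0) as [->|nj].
  - exists 0. split; [lia|congruence].
  - exists n. split; [lia|]. replace j with L by lia. congruence.
Qed.

(* Bisect the path and use thinness of the triangle formed by the geodesic and
   geodesics to the midpoint. *)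
Lemma geodesic_near_path m : forall n c u w L gam, is_path Sg n c u w -> n <= 2 ^ m ->
  is_geodesic Sg L gam u w -> forall j, j <= L ->
  exists s, s <= n /\ dist_le Sg (d * m + 1) (gam j) (c s).
Proof.
  induction m as [|m IH]; intros n c u w L gam hc hn hg j hj;
    (destruct (Nat.le_gt_cases n 1) as [hn1|hn1];
     [destruct (geodesic_near_short_path _ _ _ _ _ _ j hc hn1 hg hj) as [s [hs ->]];
      exists s; split; [exact hs|apply dist_le_eq; auto]|]); [simpl in hn; lia|].
  set (h := n / 2).
  rewrite Nat.pow_succ_r' in hn.
  pose proof (Nat.div_mod n 2 ltac:(lia)). pose proof (Nat.mod_upper_bound n 2 ltac:(lia)).
  assert (hh1 : h <= 2 ^ m) by (unfold h; lia).
  assert (hh2 : n - h <= 2 ^ m) by (unfold h; lia).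
  pose proof (path_sub Sg _ _ _ _ 0 h hc ltac:(lia)) as c1. rewrite Nat.sub_0_r in c1.
  pose proof (path_sub Sg _ _ _ _ h n hc ltac:(lia)) as c2.
  destruct hc as [hc0 [hcn _]].
  destruct (geodesic_exists Sg (c 0) (c h) (conn _ _)) as [L1 [b1 gb1]].
  destruct (geodesic_exists Sg (c h) (c n) (conn _ _)) as [L2 [b2 gb2]].
  rewrite <- hc0, <- hcn in hg.
  destruct (thinS _ _ _ _ _ _ _ _ _ hg (geodesic_rev _ _ _ _ _ gb2) (geodesic_rev _ _ _ _ _ gb1) j hj)
    as [j' [[hj' dj']|[hj' dj']]].
  - destruct (IH _ _ _ _ _ _ c2 hh2 gb2 (L2 - j') ltac:(lia)) as [s [hs ds]].
    exists (h + s). split; [lia|].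
    eapply dist_le_mono; [|eapply dist_le_trans; eauto]. lia.
  - destruct (IH _ _ _ _ _ _ c1 hh1 gb1 (L1 - j') ltac:(lia)) as [s [hs ds]].
    exists s. split; [lia|].
    eapply dist_le_mono; [|eapply dist_le_trans; eauto]. lia.
Qed.

Section QuasiGeodesic.
Context (lam : nat) (n : nat) (c : nat -> K) (u w : K) (hc : is_path Sg n c u w)
  (qgeod : forall s1 s2 m, s1 <= s2 <= n -> walk Sg m (c s1) (c s2) -> s2 - s1 <= lam * m).

Lemma qgeod_dist_le s1 s2 m : s1 <= n -> s2 <= n -> dist_le Sg m (c s1) (c s2) ->
  s2 - s1 <= lam * m /\ s1 - s2 <= lam * m.
Proof.
  intros h1 h2 [m' [hm wm]]. pose proof (Nat.mul_le_mono_l m' m lam hm).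
  destruct (Nat.le_ge_cases s1 s2).
  - pose proof (qgeod s1 s2 m' ltac:(lia) wm). split; lia.
  - pose proof (qgeod s2 s1 m' ltac:(lia) (walk_rev _ _ _ _ wm)). split; lia.
Qed.

Lemma path_along s1 s2 : s1 <= n -> s2 <= n -> exists l cm,
  is_path Sg l cm (c s1) (c s2) /\ l <= s2 - s1 + (s1 - s2) /\
  forall k, k <= l -> exists s, s <= n /\ cm k = c s.
Proof.
  intros h1 h2. destruct (Nat.le_ge_cases s1 s2).
  - exists (s2 - s1), (fun k => c (s1 + k)). split; [apply (path_sub Sg n c u w); auto; lia|].
    split; [lia|]. intros k hk. exists (s1 + k). split; auto; lia.
  - exists (s1 - s2), (fun k => c (s1 - k)). split.
    + pose proof (path_rev Sg _ _ _ _ (path_sub Sg _ _ _ _ s2 s1 hc ltac:(lia))) as [a [b e]].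
      repeat split.
      * rewrite <- a. f_equal. lia.
      * rewrite <- b. f_equal. lia.
      * intros k hk. pose proof (e k hk) as e'.
        replace (s2 + (s1 - s2 - k)) with (s1 - k) in e' by lia.
        replace (s2 + (s1 - s2 - S k)) with (s1 - S k) in e' by lia. auto.
    + split; [lia|]. intros k hk. exists (s1 - k). split; auto; lia.
Qed.

Section FarPoint.
Context (L : nat) (gam : nat -> K) (hg : is_geodesic Sg L gam u w) (D j0 : nat) (hD : 0 < D)
  (near : forall j, j <= L -> exists s, s <= n /\ dist_le Sg D (gam j) (c s))
  (hj0 : j0 <= L) (far : forall s, s <= n -> ~ dist_le Sg (D - 1) (gam j0) (c s)).

Lemma detour_start : exists jy sy ly rho, jy <= j0 /\ j0 - jy <= 2 * D /\ sy <= n /\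
  ly <= D /\ is_path Sg ly rho (gam jy) (c sy) /\
  forall k, k <= ly -> ~ dist_le Sg (D - 1) (gam j0) (rho k).
Proof.
  destruct (Nat.le_gt_cases (2 * D) j0) as [hle|hgt].
  - destruct (near (j0 - 2 * D) ltac:(lia)) as [sy [hsy [ly [hly [rho hr]]]]].
    exists (j0 - 2 * D), sy, ly, rho. do 4 (split; [lia|]). split; [exact hr|].
    intros k hk hd. pose proof (path_dist_le _ _ _ _ _ _ hr hk) as dk.
    assert (dd : dist_le Sg (D - 1 + k) (gam (j0 - 2 * D)) (gam j0)).
    { apply dist_le_sym. eapply dist_le_trans; [exact hd|apply dist_le_sym, dk]. }
    assert (hs : j0 - 2 * D <= j0 <= L) by lia.
    pose proof (geodesic_dist_le _ _ _ _ _ _ _ _ hg hs dd). lia.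
  - exists 0, 0, 0, (fun _ => c 0). do 4 (split; [lia|]). split.
    + destruct hg as [[hg0 _] _]. destruct hc as [hc0 _].
      repeat split; [congruence|intros k hk; lia].
    + intros k hk. apply far. lia.
Qed.

Lemma detour_end : exists jz sz lz rho, j0 <= jz /\ jz <= L /\ jz - j0 <= 2 * D /\ sz <= n /\
  lz <= D /\ is_path Sg lz rho (c sz) (gam jz) /\
  forall k, k <= lz -> ~ dist_le Sg (D - 1) (gam j0) (rho k).
Proof.
  destruct (Nat.le_gt_cases (j0 + 2 * D) L) as [hle|hgt].
  - destruct (near (j0 + 2 * D) ltac:(lia)) as [sz [hsz [lz [hlz [rho hr]]]]].
    exists (j0 + 2 * D), sz, lz, (fun k => rho (lz - k)). do 5 (split; [lia|]).
    split; [apply path_rev; auto|].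
    intros k hk hd. pose proof (path_dist_le _ _ _ _ _ _ hr (Nat.le_sub_l lz k)) as dk.
    assert (dd : dist_le Sg (D - 1 + (lz - k)) (gam j0) (gam (j0 + 2 * D))).
    { eapply dist_le_trans; [exact hd|apply dist_le_sym, dk]. }
    assert (hs : j0 <= j0 + 2 * D <= L) by lia.
    pose proof (geodesic_dist_le _ _ _ _ _ _ _ _ hg hs dd). lia.
  - exists L, n, 0, (fun _ => c n). do 5 (split; [lia|]). split.
    + destruct hg as [[_ [hgL _]] _]. destruct hc as [_ [hcn _]].
      repeat split; [congruence|intros k hk; lia].
    + intros k hk. apply far. lia.
Qed.

(* Leave the geodesic at distance D before and after j0, and follow the
   quasi-geodesic in between: a path of length O(lam D) avoiding the
   (D - 1)-ball around gam j0. *)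
Lemma far_detour : exists jy jz ell cp, jy <= j0 <= jz /\ jz <= L /\
  ell <= (6 * lam + 2) * D /\ is_path Sg ell cp (gam jy) (gam jz) /\
  forall k, k <= ell -> ~ dist_le Sg (D - 1) (gam j0) (cp k).
Proof.
  destruct detour_start as [jy [sy [ly [rho1 [hjy1 [hjy2 [hsy [hly [hr1 fr1]]]]]]]]].
  destruct detour_end as [jz [sz [lz [rho2 [hjz1 [hjz0 [hjz2 [hsz [hlz [hr2 fr2]]]]]]]]]].
  destruct (path_along sy sz hsy hsz) as [lc [cm [hcm [hlc fcm]]]].
  assert (dyz : dist_le Sg (ly + (jz - jy) + lz) (c sy) (c sz)).
  { eapply dist_le_trans; [eapply dist_le_trans|].
    - apply dist_le_sym, dist_le_walk. exists rho1. exact hr1.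
    - apply dist_le_walk. eapply walk_sub; [apply geodesic_path, hg|lia].
    - apply dist_le_sym, dist_le_walk. exists rho2. exact hr2. }
  destruct (qgeod_dist_le sy sz _ hsy hsz dyz) as [q1 q2].
  pose proof (Nat.mul_le_mono_l (ly + (jz - jy) + lz) (6 * D) lam ltac:(lia)).
  exists jy, jz, (ly + (lc + lz)), (pcat ly rho1 (pcat lc cm rho2)).
  do 3 (split; [lia|]). split; [apply (path_cat _ _ _ _ _ _ _ _ hr1), (path_cat _ _ _ _ _ _ _ _ hcm hr2)|].
  intros k hk.
  destruct (pcat_cases ly (lc + lz) rho1 (pcat lc cm rho2) k hk) as [[h1 ->]|[h1 ->]];
    [apply fr1; auto|].
  destruct (pcat_cases lc lz cm rho2 (k - ly) h1) as [[h2 ->]|[h2 ->]]; [|apply fr2; auto].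
  destruct (fcm _ h2) as [s [hs ->]]. apply far; auto.
Qed.

Lemma far_point_dist_le m : (6 * lam + 2) * D <= 2 ^ m -> D <= d * m + 1.
Proof.
  intro hm.
  destruct far_detour as [jy [jz [ell [cp [hj [hjz [hell [hcp fcp]]]]]]]].
  destruct (geodesic_near_path m _ _ _ _ _ _ hcp ltac:(lia)
    (geodesic_sub _ _ _ _ _ jy jz hg ltac:(lia)) (j0 - jy) ltac:(lia)) as [s [hs ds]].
  replace (jy + (j0 - jy)) with j0 in ds by lia.
  apply NNPP. intro hlt. apply (fcp s hs). eapply dist_le_mono; [|exact ds]. lia.
Qed.
End FarPoint.

Lemma morse_near L gam : is_geodesic Sg L gam u w ->
  forall j, j <= L -> exists s, s <= n /\ dist_le Sg (morse_const d lam) (gam j) (c s).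
Proof.
  intros hg.
  destruct (ex_minimal (fun D => forall j, j <= L -> exists s, s <= n /\ dist_le Sg D (gam j) (c s)))
    as [D [HD Dmin]].
  { exists L. intros j hj. exists 0. split; [lia|]. destruct hc as [hc0 _]. rewrite hc0.
    apply dist_le_sym, (dist_le_mono _ j); auto. eapply path_dist_le; eauto.
    apply geodesic_path in hg; exact hg. }
  enough (DB : D <= morse_const d lam).
  { intros j hj. destruct (HD j hj) as [s [hs ds]]. exists s. split; auto.
    eapply dist_le_mono; eauto. }
  apply log_bound. intros m hm.
  destruct (Nat.eq_dec D 0) as [->|D0]; [lia|].
  assert (exists j0, j0 <= L /\ forall s, s <= n -> ~ dist_le Sg (D - 1) (gam j0) (c s))
    as [j0 [hj0 far]].
  { apply NNPP. intro hno. assert (D <= D - 1); [|lia]. apply Dmin. intros j hj.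
    apply NNPP. intro hn'. apply hno. exists j. split; auto. intros s hs ds. apply hn'. eauto. }
  exact (far_point_dist_le L gam hg D j0 ltac:(lia) HD hj0 far m hm).
Qed.

Lemma morse_far L gam : is_geodesic Sg L gam u w -> forall s, s <= n ->
  exists j, j <= L /\ dist_le Sg (7 * morse_const d lam + 3 * lam + lam * morse_const d lam * 6)
                          (c s) (gam j).
Proof.
  intros hg s hs. set (B := morse_const d lam).
  pose proof hc as [hc0 [hcn hcs]]. pose proof (geodesic_path _ _ _ _ _ hg) as [hg0 [hgL hgs]].
  destruct (ex_minimal (fun j => j <= L /\ exists s', s <= s' /\ s' <= n /\ dist_le Sg B (gam j) (c s')))
    as [js [[hjs [s' [h1 [h2 ds']]]] jmin]].
  { exists L. split; auto. exists n. repeat split; auto. apply dist_le_eq. congruence. }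
  destruct (Nat.eq_dec js 0) as [->|nz].
  - rewrite hg0, <- hc0 in ds'.
    destruct (qgeod_dist_le 0 s' B ltac:(lia) h2 ds') as [q1 _].
    exists 0. split; [lia|]. rewrite hg0, <- hc0.
    pose proof (path_dist_le _ _ _ _ _ _ hc hs) as dd. rewrite <- hc0 in dd.
    apply dist_le_sym. eapply dist_le_mono; [|exact dd]. lia.
  - destruct (morse_near L gam hg (js - 1) ltac:(lia)) as [s'' [hs'' ds'']].
    assert (hlt : s'' < s).
    { apply NNPP. intro hge. assert (js <= js - 1); [|lia]. apply jmin. split; [lia|].
      exists s''. repeat split; auto; lia. }
    assert (adj : dist_le Sg 1 (gam (js - 1)) (gam js)).
    { apply dist_le_adj. replace js with (S (js - 1)) at 2 by lia. apply hgs. lia. }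
    assert (dss : dist_le Sg (B + 1 + B) (c s'') (c s')).
    { eapply dist_le_trans; [eapply dist_le_trans|]; [apply dist_le_sym; exact ds''|exact adj|exact ds']. }
    destruct (qgeod_dist_le s'' s' _ ltac:(lia) h2 dss) as [q1 _].
    exists (js - 1). split; [lia|].
    assert (dws : dist_le Sg (s - s'') (c s'') (c s)).
    { apply dist_le_walk. eapply walk_sub; [exact hc|lia]. }
    eapply dist_le_mono;
      [|eapply dist_le_trans; [apply dist_le_sym; exact dws|apply dist_le_sym; exact ds'']].
    lia.
Qed.
End QuasiGeodesic.
End Morse.

(* Geodesics for S1 are quasi-geodesics for S2, hence close to S2-geodesics by
   the Morse lemma, and S2-geodesic triangles are thin. *)
Lemma cayley_hyperbolic_of_quasi_isometric {K : group} (S1 S2 : K -> Prop) (lam d2 : nat) :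
  (forall s, S1 s -> S2 s) -> (forall m x y, walk S2 m x y -> dist_le S1 (lam * m) x y) ->
  thin S2 d2 -> (forall u w, exists n, walk S2 n u w) -> cayley_hyperbolic S1.
Proof.
  intros hS12 hlip thin2 conn2.
  set (B := morse_const d2 lam).
  set (R := 7 * B + 3 * lam + lam * B * 6).
  exists (lam * (R + d2 + B)).
  assert (D2 : forall M x y, dist_le S2 M x y -> dist_le S1 (lam * M) x y).
  { intros M x y [m [hm wm]]. apply hlip in wm. eapply dist_le_mono; [|exact wm]. nia. }
  assert (qgeod : forall n p x y, is_geodesic S1 n p x y ->
     forall s1 s2 m, s1 <= s2 <= n -> walk S2 m (p s1) (p s2) -> s2 - s1 <= lam * m).
  { intros n p x y hg s1 s2 m hs wm. apply hlip in wm. eapply geodesic_dist_le; eauto. }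
  assert (path2 : forall n p x y, is_geodesic S1 n p x y -> is_path S2 n p x y).
  { intros n p x y [[a [b h]] _]. repeat split; auto.
    intros k hk. destruct (h k hk); [left|right]; auto. }
  intros x y z n1 n2 n3 p1 p2 p3 g1 g2 g3 k hk.
  destruct (geodesic_exists S2 x y (conn2 _ _)) as [L1 [q1 gq1]].
  destruct (geodesic_exists S2 y z (conn2 _ _)) as [L2 [q2 gq2]].
  destruct (geodesic_exists S2 z x (conn2 _ _)) as [L3 [q3 gq3]].
  destruct (morse_far S2 d2 thin2 conn2 lam n1 p1 x y (path2 _ _ _ _ g1) (qgeod _ _ _ _ g1)
    L1 q1 gq1 k hk) as [j [hj dj]].
  destruct (thin2 _ _ _ _ _ _ _ _ _ gq1 gq2 gq3 j hj) as [j' [[hj' dj']|[hj' dj']]].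
  - destruct (morse_near S2 d2 thin2 conn2 lam n2 p2 y z (path2 _ _ _ _ g2) (qgeod _ _ _ _ g2)
      L2 q2 gq2 j' hj') as [s [hs ds]].
    exists s. left. split; auto. apply D2.
    eapply dist_le_trans; [eapply dist_le_trans|]; eauto.
  - destruct (morse_near S2 d2 thin2 conn2 lam n3 p3 z x (path2 _ _ _ _ g3) (qgeod _ _ _ _ g3)
      L3 q3 gq3 j' hj') as [s [hs ds]].
    exists s. right. split; auto. apply D2.
    eapply dist_le_trans; [eapply dist_le_trans|]; eauto.
Qed.

(** * Normal forms in HNN extensions *)

Section Transversal.
Context {H : group} (C : H -> Prop) (hC : is_subgroup C).

Definition rep (x : H) : H :=
  epsilon (inhabits gone) (fun r => C (ginv x ** r) /\ (C x -> r = gone)).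

Lemma rep_spec x : C (ginv x ** rep x) /\ (C x -> rep x = gone).
Proof.
  unfold rep. apply epsilon_spec.
  destruct (classic (C x)) as [h|h].
  - exists gone. rewrite mulg1. split; auto. apply subgroupV; auto.
  - exists x. rewrite mulVg. split; [apply subgroup1; auto|tauto].
Qed.

Lemma rep_coset x y : C (ginv x ** y) -> rep x = rep y.
Proof.
  intro hxy. unfold rep. f_equal. apply functional_extensionality; intro r.
  apply propositional_extensionality.
  assert (hyx : C (ginv y ** x)).
  { replace (ginv y ** x) with (ginv (ginv x ** y)) by (gnorm; auto). apply subgroupV; auto. }
  split; intros [h1 h2]; split.
  - replace (ginv y ** r) with ((ginv y ** x) ** (ginv x ** r)) by (gnorm; auto).
    apply subgroupM; auto.
  - intro hy. apply h2. replace x with (y ** (ginv y ** x)) by (gnorm; auto). apply subgroupM; auto.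
  - replace (ginv x ** r) with ((ginv x ** y) ** (ginv y ** r)) by (gnorm; auto).
    apply subgroupM; auto.
  - intro hx. apply h2. replace y with (x ** (ginv x ** y)) by (gnorm; auto). apply subgroupM; auto.
Qed.

Lemma rep_resid x : C (ginv (rep x) ** x).
Proof.
  replace (ginv (rep x) ** x) with (ginv (ginv x ** rep x)) by (gnorm; auto).
  apply subgroupV, rep_spec; auto.
Qed.

Lemma rep_idem x : rep (rep x) = rep x.
Proof. symmetry. apply rep_coset, rep_spec. Qed.

Lemma rep_eq1 x : rep x = gone <-> C x.
Proof.
  split; [|apply rep_spec].
  intro h. pose proof (rep_resid x) as r. rewrite h, invg1, mul1g in r. auto.
Qed.

Lemma rep_eq_coset x y : rep x = rep y -> C (ginv x ** y).
Proof.
  intro e. pose proof (rep_resid y) as h2. rewrite <- e in h2.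
  replace (ginv x ** y) with ((ginv x ** rep x) ** (ginv (rep x) ** y)) by (gnorm; auto).
  apply subgroupM, h2; auto. apply rep_spec.
Qed.

Lemma rep_mul_eq1 x y : C x -> rep (x ** y) = gone -> rep y = gone.
Proof.
  intros hx h. apply rep_eq1 in h. apply rep_eq1.
  replace y with (ginv x ** (x ** y)) by (gnorm; auto). apply subgroupVM; auto.
Qed.
End Transversal.

Section Permutations.
Context (X : Type).
Record perm := Perm {
  pfun : X -> X; pfun_inv : X -> X;
  pfunKV : forall x, pfun (pfun_inv x) = x; pfunK : forall x, pfun_inv (pfun x) = x }.

Lemma perm_ext (p q : perm) : (forall x, pfun p x = pfun q x) -> p = q.
Proof.
  intro h.
  assert (hg : forall x, pfun_inv p x = pfun_inv q x).
  { intro x. rewrite <- (pfunK q (pfun_inv p x)), <- h, pfunKV. auto. }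
  destruct p as [f1 g1 a1 b1], q as [f2 g2 a2 b2]. simpl in *.
  assert (f1 = f2) by (apply functional_extensionality; auto).
  assert (g1 = g2) by (apply functional_extensionality; auto).
  subst. f_equal; apply proof_irrelevance.
Qed.

Definition perm_mul (p q : perm) : perm.
Proof.
  refine (Perm (fun x => pfun p (pfun q x)) (fun x => pfun_inv q (pfun_inv p x)) _ _);
    intro x; rewrite ?pfunKV, ?pfunK; auto.
Defined.
Definition perm_one : perm := Perm (fun x => x) (fun x => x) (fun x => eq_refl) (fun x => eq_refl).
Definition perm_inv (p : perm) : perm := Perm (pfun_inv p) (pfun p) (pfunK p) (pfunKV p).

Definition perm_group : group.
Proof.
  refine (@Group perm perm_mul perm_one perm_inv _ _ _); intros; apply perm_ext; intro; auto.
  apply pfunK.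
Defined.
End Permutations.
Arguments Perm {X}. Arguments pfun {X}. Arguments pfun_inv {X}. Arguments perm_ext {X}.

Definition subgroup_group {G : group} (P : G -> Prop) (hP : is_subgroup P) : group.
Proof.
  refine (@Group {g | P g}
    (fun x y => exist _ (proj1_sig x ** proj1_sig y) (subgroupM P hP _ _ (proj2_sig x) (proj2_sig y)))
    (exist _ gone (subgroup1 P hP))
    (fun x => exist _ (ginv (proj1_sig x)) (subgroupV P hP _ (proj2_sig x))) _ _ _);
    intros; apply eq_sig_hprop; try (intros; apply proof_irrelevance); simpl;
    [apply mulgA|apply mul1g|apply mulVg].
Defined.

Section HNN.
Context {H : group} (A B : H -> Prop) (mu : H -> H)
  (hA : is_subgroup A) (hB : is_subgroup B) (hmu : is_iso_between A B mu).

Definition muinv (b : H) : H := epsilon (inhabits gone) (fun a => A a /\ mu a = b).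

Lemma muinv_spec b : B b -> A (muinv b) /\ mu (muinv b) = b.
Proof. intro hb. unfold muinv. apply epsilon_spec. apply hmu; auto. Qed.
Lemma mu_in a : A a -> B (mu a). Proof. apply hmu. Qed.
Lemma mu_mul a1 a2 : A a1 -> A a2 -> mu (a1 ** a2) = mu a1 ** mu a2. Proof. apply hmu. Qed.
Lemma mu_inj a1 a2 : A a1 -> A a2 -> mu a1 = mu a2 -> a1 = a2. Proof. apply hmu. Qed.
Lemma mu1 : mu gone = gone.
Proof.
  pose proof (mu_mul gone gone (subgroup1 _ hA) (subgroup1 _ hA)) as h. rewrite mul1g in h.
  apply (mulgI (mu gone)). rewrite <- h, mulg1. auto.
Qed.
Lemma muinvK a : A a -> muinv (mu a) = a.
Proof. intro ha. destruct (muinv_spec (mu a) (mu_in a ha)). apply mu_inj; auto. Qed.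
Lemma muinv_mul b1 b2 : B b1 -> B b2 -> muinv (b1 ** b2) = muinv b1 ** muinv b2.
Proof.
  intros h1 h2. destruct (muinv_spec b1 h1) as [a1 e1], (muinv_spec b2 h2) as [a2 e2].
  rewrite <- e1 at 1. rewrite <- e2 at 1. rewrite <- mu_mul; auto.
  apply muinvK, subgroupM; auto.
Qed.

(* The letter (c, e) of a normal form stands for i c * t (e = true) or
   i c * t^-1 (e = false); c is then a coset representative for A, resp. B. *)
Definition assoc (e : bool) : H -> Prop := if e then A else B.
Definition assoc_iso (e : bool) : H -> H := if e then mu else muinv.
Definition assoc_rep (e : bool) := rep (assoc e).

Lemma assoc_subgroup e : is_subgroup (assoc e). Proof. destruct e; auto. Qed.
Lemma assoc_iso_in e r : assoc e r -> assoc (negb e) (assoc_iso e r).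
Proof. destruct e; simpl; intro h; [apply mu_in; auto|apply muinv_spec; auto]. Qed.
Lemma assoc_iso_mul e r1 r2 : assoc e r1 -> assoc e r2 ->
  assoc_iso e (r1 ** r2) = assoc_iso e r1 ** assoc_iso e r2.
Proof. destruct e; simpl; intros; [apply mu_mul|apply muinv_mul]; auto. Qed.
Lemma assoc_iso1 e : assoc_iso e gone = gone.
Proof. destruct e; simpl; [apply mu1|]. rewrite <- mu1 at 1. apply muinvK, subgroup1; auto. Qed.
Lemma assoc_rep_resid e x : assoc e (ginv (assoc_rep e x) ** x).
Proof. apply (rep_resid (assoc e) (assoc_subgroup e)). Qed.
Lemma assoc_rep1 e : assoc_rep e gone = gone.
Proof. apply rep_eq1; [apply assoc_subgroup|]. apply subgroup1, assoc_subgroup. Qed.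

(* Britton's condition: no subword t^e * i 1 * t^-e. *)
Fixpoint nf (w : list (H * bool)) : Prop :=
  match w with
  | [] => True
  | (c, e) :: w' => assoc_rep e c = c /\ nf w' /\
      match w' with [] => True | (c', e') :: _ => e <> e' -> c' <> gone end
  end.

Lemma nf_app_inv w w2 : nf (w ++ w2) -> nf w.
Proof.
  induction w as [|[c e] w IH]; simpl; auto. intros [h1 [h2 h3]]. do 2 (split; auto).
  destruct w as [|[c' e'] w']; simpl in *; auto.
Qed.

Lemma nf_snoc w c e : nf w -> assoc_rep e c = c ->
  (forall w' c' e', w = w' ++ [(c', e')] -> e' <> e -> c <> gone) -> nf (w ++ [(c, e)]).
Proof.
  induction w as [|[c1 e1] w IH]; intros hw hc hl; simpl; auto.
  destruct hw as [h1 [h2 h3]]. split; auto. split.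
  - apply IH; auto. intros w' c' e' ew. apply (hl ((c1, e1) :: w') c' e'). rewrite ew; auto.
  - destruct w as [|[c2 e2] w2]; simpl; auto.
    intro hne. apply (hl [] c1 e1); auto.
Qed.

(* Left multiplication by i h and by t^e on normal forms (w, h0), read as
   eval_word w * i h0. *)
Fixpoint act_h (h : H) (w : list (H * bool)) (h0 : H) : list (H * bool) * H :=
  match w with
  | [] => ([], h ** h0)
  | (c, e) :: w' =>
      let c' := assoc_rep e (h ** c) in
      let p := act_h (assoc_iso e (ginv c' ** (h ** c))) w' h0 in
      ((c', e) :: fst p, snd p)
  end.

Definition act_t (e : bool) (x : list (H * bool) * H) : list (H * bool) * H :=
  match fst x with
  | (c, e') :: w' =>
      if excluded_middle_informative (c = gone /\ e' = negb e) then (w', snd x)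
      else ((gone, e) :: fst x, snd x)
  | [] => ([(gone, e)], snd x)
  end.

Lemma act_h_mul w : forall h1 h2 h0,
  act_h h1 (fst (act_h h2 w h0)) (snd (act_h h2 w h0)) = act_h (h1 ** h2) w h0.
Proof.
  induction w as [|[c e] w IH]; intros h1 h2 h0; simpl; [rewrite mulgA; auto|].
  rewrite IH.
  set (c2 := assoc_rep e (h2 ** c)).
  assert (ec : assoc_rep e (h1 ** c2) = assoc_rep e (h1 ** h2 ** c)).
  { apply rep_coset; [apply assoc_subgroup|].
    replace (ginv (h1 ** c2) ** (h1 ** h2 ** c)) with (ginv c2 ** (h2 ** c)) by (gnorm; auto).
    apply assoc_rep_resid. }
  rewrite ec, <- assoc_iso_mul; [|rewrite <- ec; apply assoc_rep_resid|apply assoc_rep_resid].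
  set (r := assoc_rep e (h1 ** h2 ** c)).
  replace (ginv r ** (h1 ** c2) ** (ginv c2 ** (h2 ** c))) with (ginv r ** (h1 ** h2 ** c))
    by (gnorm; reflexivity).
  reflexivity.
Qed.

Lemma act_h1 w h0 : nf w -> act_h gone w h0 = (w, h0).
Proof.
  induction w as [|[c e] w IH]; intros hw; simpl; [rewrite mul1g; auto|].
  destruct hw as [hc [hw _]]. rewrite mul1g, hc, mulVg, assoc_iso1, IH; auto.
Qed.

Lemma act_h_nf w : forall h h0, nf w -> nf (fst (act_h h w h0)).
Proof.
  induction w as [|[c e] w IH]; intros h h0 hw; simpl; auto.
  destruct hw as [hc [hw hh]]. split; [apply rep_idem, assoc_subgroup|]. split; [apply IH; auto|].
  destruct w as [|[c2 e2] w2]; simpl; auto.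
  intros hne hone. apply (hh hne).
  replace e2 with (negb e) in * by (destruct e, e2; simpl; congruence).
  destruct hw as [hc2 _]. rewrite <- hc2.
  exact (rep_mul_eq1 _ (assoc_subgroup _) _ c2 (assoc_iso_in e _ (assoc_rep_resid e _)) hone).
Qed.

Lemma act_t_pinch e e' w h0 : e' = negb e -> act_t e ((gone, e') :: w, h0) = (w, h0).
Proof.
  intro he. unfold act_t. simpl.
  destruct (excluded_middle_informative _) as [_|hn]; auto. exfalso; auto.
Qed.

Lemma act_t_push e x : (forall c w', fst x = (c, negb e) :: w' -> c <> gone) ->
  act_t e x = ((gone, e) :: fst x, snd x).
Proof.
  destruct x as [[|[c e'] w'] h0]; unfold act_t; simpl; auto. intro h.
  destruct (excluded_middle_informative _) as [[-> ->]|_]; auto. exfalso. apply (h gone w'); auto.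
Qed.

Lemma act_t_nf e x : nf (fst x) -> nf (fst (act_t e x)).
Proof.
  destruct x as [[|[c e'] w'] h0]; unfold act_t; simpl.
  - intros _. split; [apply assoc_rep1|split; auto].
  - intros hw. destruct (excluded_middle_informative _) as [_|hn]; simpl; [apply hw|].
    split; [apply assoc_rep1|split; [exact hw|]].
    intros hne ->. apply hn. split; auto. destruct e, e'; simpl in *; congruence.
Qed.

Lemma act_tK e x : nf (fst x) -> act_t (negb e) (act_t e x) = x.
Proof.
  destruct x as [w h0]. intro hw.
  destruct (classic (exists w', w = (gone, negb e) :: w')) as [[w' ->]|hn].
  - rewrite act_t_pinch; auto. apply act_t_push. simpl. intros c w'' -> ->.
    destruct hw as [_ [_ hh]]. apply hh; [|reflexivity].
    rewrite Bool.negb_involutive. destruct e; discriminate.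
  - rewrite (act_t_push e (w, h0)) by (simpl; intros c w' -> ->; eauto).
    apply act_t_pinch. rewrite Bool.negb_involutive. auto.
Qed.

(* t^-1 * i a * t = i (mu a), acting on normal forms. *)
Lemma act_t_conj a x : A a -> nf (fst x) ->
  act_t false (act_h a (fst (act_t true x)) (snd (act_t true x))) = act_h (mu a) (fst x) (snd x).
Proof.
  intros ha hx. destruct x as [w h0].
  assert (hra : assoc_rep true a = gone) by (apply rep_eq1; [apply assoc_subgroup|auto]).
  assert (hrb : assoc_rep false (mu a) = gone)
    by (apply rep_eq1; [apply assoc_subgroup|apply mu_in; auto]).
  destruct (classic (exists w', w = (gone, false) :: w')) as [[w' ->]|hn].
  - rewrite act_t_pinch by auto. simpl. rewrite mulg1, hrb, invg1, mul1g, muinvK by auto.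
    apply act_t_push. destruct w' as [|[c2 e2] w2]; simpl; [discriminate|].
    intros c w'' E hc. injection E as <- -> _.
    destruct hx as [_ [[hc2 _] hh]]. apply hh; [discriminate|]. rewrite <- hc2.
    apply (rep_mul_eq1 _ (assoc_subgroup true) a); auto.
  - rewrite (act_t_push true (w, h0)) by (simpl; intros c w' -> ->; eauto). simpl.
    rewrite mulg1, hra, invg1, mul1g. destruct (act_h (mu a) w h0). apply act_t_pinch. auto.
Qed.

Definition nforms := {x : list (H * bool) * H | nf (fst x)}.

Lemma nforms_eq (x y : nforms) : proj1_sig x = proj1_sig y -> x = y.
Proof. destruct x as [x hx], y as [y hy]; simpl. intros ->. f_equal. apply proof_irrelevance. Qed.

Definition act_hN (h : H) (x : nforms) : nforms :=
  exist _ (act_h h (fst (proj1_sig x)) (snd (proj1_sig x))) (act_h_nf _ h _ (proj2_sig x)).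
Definition act_tN (e : bool) (x : nforms) : nforms :=
  exist _ (act_t e (proj1_sig x)) (act_t_nf e _ (proj2_sig x)).

Lemma act_hN_mul h1 h2 x : act_hN h1 (act_hN h2 x) = act_hN (h1 ** h2) x.
Proof. apply nforms_eq, act_h_mul. Qed.
Lemma act_hN1 x : act_hN gone x = x.
Proof. apply nforms_eq. destruct x as [[w h0] hx]. apply act_h1; auto. Qed.

Definition perm_h (h : H) : perm nforms.
Proof.
  refine (Perm (act_hN h) (act_hN (ginv h)) _ _); intro x; rewrite act_hN_mul;
    [rewrite mulgV|rewrite mulVg]; apply act_hN1.
Defined.
Definition perm_t : perm nforms.
Proof.
  refine (Perm (act_tN true) (act_tN false) _ _); intro x; apply nforms_eq;
    [apply (act_tK false)|apply (act_tK true)]; apply (proj2_sig x).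
Defined.

Lemma perm_h_hom : @is_hom H (perm_group nforms) perm_h.
Proof. intros h1 h2. apply perm_ext. intro x. symmetry. apply act_hN_mul. Qed.
Lemma perm_t_conj a : A a ->
  @gmul (perm_group nforms) (@gmul (perm_group nforms) (@ginv (perm_group nforms) perm_t) (perm_h a)) perm_t
  = perm_h (mu a).
Proof. intro ha. apply perm_ext. intro x. apply nforms_eq, act_t_conj, (proj2_sig x); auto. Qed.
Context {G : group} (i : H -> G) (t : G) (hG : is_HNN_extension A mu i t).

Lemma i_hom : is_hom i. Proof. destruct hG as [h _]; exact h. Qed.
Lemma i_mul x y : i (x ** y) = i x ** i y. Proof. apply i_hom. Qed.
Lemma i_one : i gone = gone. Proof. apply hom1, i_hom. Qed.
Lemma i_inv x : i (ginv x) = ginv (i x). Proof. apply homV, i_hom. Qed.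
Lemma t_conj a : A a -> ginv t ** i a ** t = i (mu a).
Proof. destruct hG as [_ [h _]]; apply h. Qed.

(* The universal property yields the action of G on normal forms; the normal
   form of g is the image of the empty normal form under g. *)
Lemma perm_rep_exists : exists f : G -> perm_group nforms,
  is_hom f /\ (forall h, f (i h) = perm_h h) /\ f t = perm_t.
Proof.
  destruct hG as [_ [_ h]].
  destruct (h (perm_group nforms) perm_h perm_t perm_h_hom perm_t_conj) as [f [hf _]]. eauto.
Qed.
Definition perm_rep : G -> perm_group nforms :=
  proj1_sig (constructive_indefinite_description _ perm_rep_exists).
Lemma perm_rep_spec : is_hom perm_rep /\ (forall h, perm_rep (i h) = perm_h h) /\ perm_rep t = perm_t.
Proof. exact (proj2_sig (constructive_indefinite_description _ perm_rep_exists)). Qed.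
Lemma perm_rep_hom : is_hom perm_rep. Proof. apply perm_rep_spec. Qed.
Lemma perm_rep_i h : perm_rep (i h) = perm_h h. Proof. apply perm_rep_spec. Qed.
Lemma perm_rep_t : perm_rep t = perm_t. Proof. apply perm_rep_spec. Qed.

Lemma HNN_induction (P : G -> Prop) : is_subgroup P -> (forall h, P (i h)) -> P t -> forall g, P g.
Proof.
  intros hP hPi hPt g.
  destruct hG as [i_hom' [t_conj' hup]].
  pose (K := subgroup_group P hP).
  pose (f := fun h => exist P (i h) (hPi h) : K).
  pose (s := exist P t hPt : K).
  assert (hf : is_hom f).
  { intros x y. apply eq_sig_hprop; [intros; apply proof_irrelevance|]. simpl. apply i_hom'. }
  assert (hs : forall a, A a -> gmul (gmul (ginv s) (f a)) s = f (mu a)).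
  { intros a ha. apply eq_sig_hprop; [intros; apply proof_irrelevance|]. simpl. apply t_conj'; auto. }
  destruct (hup K f s hf hs) as [psi [[hpsi [hpsi_i hpsi_t]] _]].
  destruct (hup G i t i_hom' t_conj') as [id' [_ huniq]].
  pose (incl := fun g => proj1_sig (psi g)).
  assert (e1 : incl g = id' g).
  { apply huniq.
    - intros x y. unfold incl. rewrite hpsi. reflexivity.
    - intro h. unfold incl. rewrite hpsi_i. reflexivity.
    - unfold incl. rewrite hpsi_t. reflexivity. }
  assert (e2 : g = id' g).
  { apply (huniq (fun x => x)); auto. intros x y; auto. }
  rewrite e2, <- e1. unfold incl. apply (proj2_sig (psi g)).
Qed.

Definition tpow (e : bool) : G := if e then t else ginv t.
Fixpoint eval_word (w : list (H * bool)) : G :=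
  match w with [] => gone | (c, e) :: w' => i c ** (tpow e ** eval_word w') end.
Definition eval_nf (x : list (H * bool) * H) : G := eval_word (fst x) ** i (snd x).

Lemma eval_word_snoc w c e : eval_word (w ++ [(c, e)]) = eval_word w ** i c ** tpow e.
Proof.
  induction w as [|[c1 e1] w IH]; simpl.
  - rewrite mulg1, mul1g. auto.
  - rewrite IH. gnorm. auto.
Qed.

Lemma tpow_swap e r : assoc e r -> i r ** tpow e = tpow e ** i (assoc_iso e r).
Proof.
  destruct e; simpl; intro hr.
  - rewrite <- (t_conj r hr). gnorm. auto.
  - destruct (muinv_spec r hr) as [ha hm]. rewrite <- hm at 1. rewrite <- (t_conj _ ha). gnorm. auto.
Qed.

Lemma eval_act_h h w : forall h0, i h ** eval_nf (w, h0) = eval_nf (act_h h w h0).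
Proof.
  revert h. induction w as [|[c e] w IH]; intros h h0; unfold eval_nf; simpl.
  - rewrite mul1g, mul1g, i_mul. auto.
  - set (c' := assoc_rep e (h ** c)). set (r := ginv c' ** (h ** c)).
    assert (hr : assoc e r) by apply assoc_rep_resid.
    assert (ehc : i h ** i c = i c' ** i r) by (unfold r; rewrite <- !i_mul; f_equal; gnorm; auto).
    pose proof (IH (assoc_iso e r) h0) as IH'. unfold eval_nf in IH'. simpl in IH'.
    destruct (act_h (assoc_iso e r) w h0) as [w1 h1]. simpl in *.
    transitivity (i c' ** tpow e ** (eval_word w1 ** i h1)); [|gnorm; reflexivity].
    rewrite <- IH'.
    transitivity (i c' ** (tpow e ** i (assoc_iso e r)) ** (eval_word w ** i h0));
      [|gnorm; reflexivity].
    rewrite <- tpow_swap by auto. gnorm. rewrite ehc. reflexivity.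
Qed.

Lemma eval_act_t e x : tpow e ** eval_nf x = eval_nf (act_t e x).
Proof.
  destruct x as [[|[c e'] w'] h0]; unfold act_t, eval_nf; simpl.
  - rewrite i_one. gnorm. auto.
  - destruct (excluded_middle_informative _) as [[-> ->]|_]; simpl; rewrite i_one, mul1g;
      [destruct e|]; simpl; gnorm; auto.
Qed.

Definition nform0 : nforms := exist _ ([], gone) I.

Lemma perm_rep_eval g : forall x : nforms,
  g ** eval_nf (proj1_sig x) = eval_nf (proj1_sig (pfun (perm_rep g) x)).
Proof.
  revert g. apply (HNN_induction (fun g => forall x : nforms,
    g ** eval_nf (proj1_sig x) = eval_nf (proj1_sig (pfun (perm_rep g) x)))).
  - split; [|split].
    + intro x. rewrite (hom1 _ perm_rep_hom). simpl. apply mul1g.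
    + intros a b ha hb x. rewrite (perm_rep_hom a b). simpl. rewrite <- ha, <- hb, mulgA. auto.
    + intros a ha x. rewrite (homV _ perm_rep_hom). simpl.
      pose proof (ha (pfun_inv (perm_rep a) x)) as e. rewrite pfunKV in e. rewrite <- e. gnorm. auto.
  - intros h x. rewrite perm_rep_i. simpl. destruct x as [[w h0] hx]. simpl. apply eval_act_h.
  - intro x. rewrite perm_rep_t. simpl. apply (eval_act_t true).
Qed.

Definition nform_of (g : G) : list (H * bool) * H := proj1_sig (pfun (perm_rep g) nform0).
Definition pi (g : G) := fst (nform_of g).
Definition coord (g : G) := snd (nform_of g).

Lemma pi_nf g : nf (pi g). Proof. apply (proj2_sig (pfun (perm_rep g) nform0)). Qed.

Lemma eval_nform_of g : eval_nf (nform_of g) = g.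
Proof.
  unfold nform_of. rewrite <- perm_rep_eval. simpl. unfold eval_nf; simpl. rewrite i_one, !mulg1. auto.
Qed.
Lemma nform_decomp g : g = eval_word (pi g) ** i (coord g).
Proof. rewrite <- (eval_nform_of g) at 1. unfold eval_nf, pi, coord. auto. Qed.

Lemma perm_rep_tpow e : pfun (perm_rep (tpow e)) = act_tN e.
Proof.
  destruct e; simpl; rewrite ?perm_rep_t; auto. rewrite (homV _ perm_rep_hom), perm_rep_t. simpl. auto.
Qed.

Lemma nform_of_eval_word w : forall h0 (hw : nf w),
  proj1_sig (pfun (perm_rep (eval_word w)) (exist _ ([], h0) I)) = (w, h0).
Proof.
  induction w as [|[c e] w IH]; intros h0 hw; simpl.
  - rewrite (hom1 _ perm_rep_hom). simpl. auto.
  - rewrite (perm_rep_hom (i c)), (perm_rep_hom (tpow e)). simpl. rewrite perm_rep_tpow.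
    destruct hw as [hc [hw hh]].
    rewrite perm_rep_i. simpl. rewrite IH; auto. simpl.
    rewrite act_t_push.
    2:{ destruct w as [|[c2 e2] w2]; simpl; [discriminate|]. intros c' w' E hc'.
        injection E as -> -> _. apply hh; auto. destruct e; discriminate. }
    simpl. rewrite mulg1, hc, mulVg, assoc_iso1, act_h1; auto.
Qed.

Lemma nform_of_eval x : nf (fst x) -> nform_of (eval_nf x) = x.
Proof.
  destruct x as [w h0]. intro hw. unfold nform_of, eval_nf. simpl.
  rewrite (perm_rep_hom (eval_word w)), perm_rep_i. simpl.
  replace (act_hN h0 nform0) with (exist (fun x => nf (fst x)) ([] : list (H * bool), h0) I)
    by (apply nforms_eq; simpl; rewrite mulg1; auto).
  apply nform_of_eval_word; auto.
Qed.

Lemma i_inj h h' : i h = i h' -> h = h'.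
Proof.
  intro e. assert (nform_of (eval_nf ([], h)) = nform_of (eval_nf ([], h'))) as E.
  { unfold eval_nf; simpl. rewrite e. auto. }
  rewrite !nform_of_eval in E; simpl; auto. congruence.
Qed.

Lemma pi_i h : pi (i h) = [].
Proof.
  unfold pi. replace (i h) with (eval_nf ([], h)) by (unfold eval_nf; simpl; apply mul1g).
  rewrite nform_of_eval; simpl; auto.
Qed.

Lemma nform_of_mul_i g h : nform_of (g ** i h) = (pi g, coord g ** h).
Proof.
  rewrite (nform_decomp g) at 1. rewrite <- mulgA, <- i_mul.
  replace (eval_word (pi g) ** i (coord g ** h)) with (eval_nf (pi g, coord g ** h)) by auto.
  apply nform_of_eval. apply pi_nf.
Qed.
Lemma pi_mul_i g h : pi (g ** i h) = pi g.
Proof. unfold pi at 1. rewrite nform_of_mul_i. auto. Qed.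

Lemma same_vertex_mul_i g g' : pi g = pi g' -> g' = g ** i (ginv (coord g) ** coord g').
Proof.
  intro e. rewrite (nform_decomp g'), (nform_decomp g) at 1. rewrite e, i_mul, i_inv. gnorm. auto.
Qed.

Lemma nform_of_mul_t_cancel g w' c' : pi g = w' ++ [(c', false)] -> A (coord g) ->
  nform_of (g ** t) = (w', c' ** mu (coord g)).
Proof.
  intros ew ha. rewrite (nform_decomp g) at 1. rewrite ew, eval_word_snoc. simpl.
  replace (eval_word w' ** i c' ** ginv t ** i (coord g) ** t)
    with (eval_word w' ** i c' ** (ginv t ** i (coord g) ** t)) by (gnorm; auto).
  rewrite t_conj, <- mulgA, <- i_mul; auto.
  apply (nform_of_eval (w', _)). simpl. pose proof (pi_nf g) as h. rewrite ew in h.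
  eapply nf_app_inv; eauto.
Qed.

Lemma nform_of_mul_t_extend g : ~ (exists w' c', pi g = w' ++ [(c', false)] /\ A (coord g)) ->
  nform_of (g ** t) = (pi g ++ [(assoc_rep true (coord g), true)],
                       mu (ginv (assoc_rep true (coord g)) ** coord g)).
Proof.
  intro hn. set (c := assoc_rep true (coord g)). set (a := ginv c ** coord g).
  assert (ha : A a) by apply (assoc_rep_resid true).
  rewrite (nform_decomp g) at 1.
  replace (eval_word (pi g) ** i (coord g) ** t)
    with (eval_word (pi g ++ [(c, true)]) ** (ginv t ** i a ** t))
    by (rewrite eval_word_snoc; unfold a; rewrite i_mul, i_inv; simpl; gnorm; auto).
  rewrite t_conj; auto.
  apply (nform_of_eval (_, _)). simpl. apply nf_snoc.
  - apply pi_nf.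
  - apply rep_idem, assoc_subgroup.
  - intros w' c' e' ew hne hc. destruct e'; [congruence|]. apply hn. exists w', c'. split; auto.
    apply (rep_eq1 _ (assoc_subgroup true)). auto.
Qed.

Lemma nform_of_mul_t g :
  (exists w' c', pi g = w' ++ [(c', false)] /\ A (coord g) /\
     nform_of (g ** t) = (w', c' ** mu (coord g))) \/
  nform_of (g ** t) = (pi g ++ [(assoc_rep true (coord g), true)],
                       mu (ginv (assoc_rep true (coord g)) ** coord g)).
Proof.
  destruct (classic (exists w' c', pi g = w' ++ [(c', false)] /\ A (coord g)))
    as [[w' [c' [ew ha]]]|hn].
  - left. exists w', c'. do 2 (split; auto). apply nform_of_mul_t_cancel; auto.
  - right. apply nform_of_mul_t_extend; auto.
Qed.

Lemma pi_t : pi t = [(gone, true)].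
Proof.
  replace t with (i gone ** t) by (rewrite i_one; apply mul1g).
  unfold pi. destruct (nform_of_mul_t (i gone)) as [[w' [c' [e _]]]|e].
  - rewrite pi_i in e. destruct w'; simpl in e; discriminate.
  - rewrite e. rewrite pi_i. simpl. unfold coord. 
    replace (i gone) with (eval_nf ([], gone)) by (unfold eval_nf; simpl; rewrite mul1g; auto).
    rewrite nform_of_eval; simpl; auto. rewrite assoc_rep1. auto.
Qed.

Lemma pi_mul_t_grow g r x : pi g = r -> pi (g ** t) = r ++ [x] ->
  snd x = true /\ assoc_rep true (coord g) = fst x.
Proof.
  intros e1 e2. unfold pi in e2 at 1.
  destruct (nform_of_mul_t g) as [[w' [c' [ew [_ en]]]]|en]; rewrite en in e2; simpl in e2.
  - exfalso. rewrite e1, e2 in ew. apply (f_equal (@length _)) in ew.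
    rewrite !length_app in ew. simpl in ew. lia.
  - fold (pi g) in e2. rewrite e1 in e2. apply app_inv_head in e2. injection e2 as <-. auto.
Qed.

Lemma pi_mul_t_shrink g r x : pi (g ** t) = r -> pi g = r ++ [x] ->
  snd x = false /\ A (coord g).
Proof.
  intros e1 e2. unfold pi in e1 at 1.
  destruct (nform_of_mul_t g) as [[w' [c' [ew [ha en]]]]|en]; rewrite en in e1; simpl in e1.
  - rewrite e2, e1 in ew. apply app_inv_head in ew. injection ew as ->. auto.
  - exfalso. fold (pi g) in e1. rewrite <- e1 in e2. apply (f_equal (@length _)) in e2.
    rewrite !length_app in e2. simpl in e2. lia.
Qed.

Lemma t_not_i h : t <> i h.
Proof. intro e. pose proof pi_t as p. rewrite e, pi_i in p. discriminate. Qed.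

Lemma pi_mul_gen g s : (s = t \/ exists h, s = i h) -> tree_step (pi g) (pi (g ** s)).
Proof.
  intros [->|[h ->]].
  - unfold pi at 2. destruct (nform_of_mul_t g) as [[w' [c' [e [_ e2]]]]|e2]; rewrite e2; simpl.
    + right; right. exists (c', false). auto.
    + right; left. eexists; eauto.
  - left. rewrite pi_mul_i. auto.
Qed.

Lemma pi_adj_of_gens (S : G -> Prop) (hS : forall s, S s -> s = t \/ exists h, s = i h) :
  forall g g', cay_adj S g g' -> tree_step (pi g) (pi g').
Proof.
  intros g g' [h|h].
  - rewrite <- (mulKVg g g'). apply pi_mul_gen; auto.
  - apply tree_step_sym. rewrite <- (mulKVg g' g). apply pi_mul_gen; auto.
Qed.

Definition S1 : G -> Prop := rel_gen_set [t] [image i (fun _ => True)].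

Lemma S1_cases s : S1 s -> s = t \/ exists h, s = i h.
Proof.
  intros [h|[P [hP hs]]].
  - left. destruct h as [h|[]]; auto.
  - right. destruct hP as [hP|[]]. subst P. destruct hs as [h [_ e]]. eauto.
Qed.

Lemma S1_generates : generates S1.
Proof.
  intros g P hP hS. apply HNN_induction; auto.
  - intro h. apply hS. right. exists (image i (fun _ => True)). split; [left; auto|]. exists h; auto.
  - apply hS. left. left. auto.
Qed.

Lemma weakly_rel_hyperbolic_H : weakly_rel_hyperbolic [image i (fun _ => True)].
Proof.
  exists [t]. split; [apply S1_generates|]. exists 1.
  apply (thin_of_small_fibers S1 (gone, true) pi (pi_adj_of_gens _ S1_cases)).
  intros g g' e. apply dist_le_adj. left. rewrite (same_vertex_mul_i g g' e), mulKg.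
  right. exists (image i (fun _ => True)). split; [left; auto|]. eexists; eauto.
Qed.
Section RelativeGenerators.
Context (Y : list H).
Definition SH : H -> Prop := rel_gen_set Y [A; B].
Definition SAB : G -> Prop := rel_gen_set (t :: map i Y) [image i A; image i B].
Definition SA : G -> Prop := rel_gen_set (t :: map i Y) [image i A].

Lemma SAB_cases s : SAB s -> s = t \/ exists h, s = i h /\ SH h.
Proof.
  intros [hs|[P [hP hs]]].
  - destruct hs as [->|hs]; [left; auto|]. right. apply in_map_iff in hs. destruct hs as [y [<- hy]].
    exists y. split; auto. left; auto.
  - right. destruct hP as [<-|[<-|[]]]; destruct hs as [h [hh <-]]; exists h; split; auto;
      right; [exists A|exists B]; split; simpl; auto.
Qed.

Lemma SAB_i h : SH h -> SAB (i h).
Proof.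
  intros [hy|[P [hP hp]]].
  - left. right. apply in_map; auto.
  - right. destruct hP as [<-|[<-|[]]].
    + exists (image i A). split; [left; auto|]. exists h; auto.
    + exists (image i B). split; [right; left; auto|]. exists h; auto.
Qed.

Lemma SAB_iA d : A d -> SAB (i d).
Proof. intro h. right. exists (image i A). split; [left; auto|]. exists d; auto. Qed.
Lemma SAB_iB d : B d -> SAB (i d).
Proof. intro h. right. exists (image i B). split; [right; left; auto|]. exists d; auto. Qed.

Lemma SAB_pi_adj g g' : cay_adj SAB g g' -> tree_step (pi g) (pi g').
Proof.
  apply pi_adj_of_gens. intros s hs. destruct (SAB_cases s hs) as [->|[h [-> _]]]; eauto.
Qed.

Lemma SAB_tree_edge g g' r x : cay_adj SAB g g' -> pi g = r -> pi g' = r ++ [x] ->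
  (snd x = true /\ g' = g ** t /\ assoc_rep true (coord g) = fst x) \/
  (snd x = false /\ g = g' ** t /\ A (coord g')).
Proof.
  intros hadj e1 e2.
  destruct hadj as [h|h]; destruct (SAB_cases _ h) as [et|[hh [et _]]];
    [left|exfalso|right|exfalso].
  - assert (eg : g' = g ** t) by (rewrite <- et, mulKVg; auto).
    subst g'. destruct (pi_mul_t_grow g r x e1 e2). auto.
  - apply (snoc_neq r x). rewrite <- e2, <- e1, <- (mulKVg g g'), et. symmetry. apply pi_mul_i.
  - assert (eg : g = g' ** t) by (rewrite <- et, mulKVg; auto).
    subst g. destruct (pi_mul_t_shrink g' r x e1 e2). auto.
  - apply (snoc_neq r x). rewrite <- e2, <- e1, <- (mulKVg g' g), et. apply pi_mul_i.
Qed.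

Lemma SAB_adj_mul_iA g d : A d -> cay_adj SAB g (g ** i d).
Proof. intro h. left. rewrite mulKg. apply SAB_iA; auto. Qed.
Lemma SAB_adj_conj g d : A d -> cay_adj SAB (g ** t) (g ** i d ** t).
Proof.
  intro h. left. replace (ginv (g ** t) ** (g ** i d ** t)) with (ginv t ** i d ** t) by (gnorm; auto).
  rewrite t_conj; auto. apply SAB_iB. apply mu_in; auto.
Qed.

Lemma SAB_edge_lifts_close g1 g1' g2 g2' r x : cay_adj SAB g1 g1' -> cay_adj SAB g2 g2' ->
  pi g1 = r -> pi g2 = r -> pi g1' = r ++ [x] -> pi g2' = r ++ [x] ->
  dist_le SAB 1 g1 g2 /\ dist_le SAB 1 g1' g2'.
Proof.
  intros a1 a2 e1 e2 e1' e2'.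
  destruct (SAB_tree_edge _ _ _ _ a1 e1 e1') as [[b1 [f1 r1]]|[b1 [f1 r1]]];
  destruct (SAB_tree_edge _ _ _ _ a2 e2 e2') as [[b2 [f2 r2]]|[b2 [f2 r2]]]; try congruence.
  - set (dd := ginv (coord g1) ** coord g2).
    assert (hd : A dd).
    { apply (rep_eq_coset _ (assoc_subgroup true)). unfold assoc_rep in *. simpl in *. congruence. }
    assert (eg : g2 = g1 ** i dd) by (apply same_vertex_mul_i; congruence).
    split; apply dist_le_adj.
    + rewrite eg. apply SAB_adj_mul_iA; auto.
    + rewrite f1, f2, eg. apply SAB_adj_conj; auto.
  - set (dd := ginv (coord g1') ** coord g2').
    assert (hd : A dd) by (apply subgroupVM; auto).
    assert (eg : g2' = g1' ** i dd) by (apply same_vertex_mul_i; congruence).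
    split; apply dist_le_adj.
    + rewrite f1, f2, eg. apply SAB_adj_conj; auto.
    + rewrite eg. apply SAB_adj_mul_iA; auto.
Qed.

Lemma walk_SAB_of_SH m h1 h2 g0 : walk SH m h1 h2 -> walk SAB m (g0 ** i h1) (g0 ** i h2).
Proof.
  intros [p [p0 [p1 hp]]]. exists (fun j => g0 ** i (p j)). repeat split; try congruence.
  intros k hk. destruct (hp k hk) as [e|e]; [left|right];
    rewrite invMg, <- mulgA, (mulgA (ginv g0)), mulVg, mul1g, <- i_inv, <- i_mul; apply SAB_i; auto.
Qed.

Lemma SAB_fiber_dist_le g g' k : pi g = pi g' -> dist_le SH k (coord g) (coord g') -> dist_le SAB k g g'.
Proof.
  intros e [m [hm wm]]. exists m. split; auto.
  rewrite (nform_decomp g), (nform_decomp g'), <- e. apply walk_SAB_of_SH; auto.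
Qed.

Lemma SAB_fiber_adj g g' : pi g = pi g' -> cay_adj SAB g g' -> cay_adj SH (coord g) (coord g').
Proof.
  intros e hadj. pose proof (same_vertex_mul_i g g' e) as eg.
  set (dd := ginv (coord g) ** coord g') in eg.
  destruct hadj as [h|h].
  - rewrite eg, mulKg in h. destruct (SAB_cases _ h) as [et|[hh [et hs]]].
    + exfalso. apply (t_not_i dd). auto.
    + left. apply i_inj in et. fold dd. rewrite et. auto.
  - rewrite eg, invMg, mulgKV, <- i_inv in h. destruct (SAB_cases _ h) as [et|[hh [et hs]]].
    + exfalso. apply (t_not_i (ginv dd)). auto.
    + right. apply i_inj in et.
      replace (ginv (coord g') ** coord g) with (ginv dd) by (unfold dd; gnorm; auto).
      rewrite et. auto.
Qed.

Lemma SA_SAB s : SA s -> SAB s.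
Proof.
  intros [h|[P [hP hs]]]; [left; auto|]. right. exists P. split; auto.
  destruct hP as [<-|[]]. left; auto.
Qed.

Lemma SA_t : SA t. Proof. left. left. auto. Qed.
Lemma SA_iA a : A a -> SA (i a).
Proof. intro ha. right. exists (image i A). split; [left; auto|]. exists a; auto. Qed.

Lemma i_B_conj b : B b -> i b = ginv t ** i (muinv b) ** t.
Proof. intro hb. destruct (muinv_spec b hb) as [ha hm]. rewrite t_conj, hm; auto. Qed.

Lemma SAB_dist_le_SA s : SAB s -> dist_le SA 3 gone s.
Proof.
  assert (gen1 : forall s, SA s -> dist_le SA 3 gone s).
  { intros s' hs'. apply (dist_le_mono _ 1); [lia|]. apply dist_le_adj. left.
    rewrite invg1, mul1g. auto. }
  intros [hs|[P [hP hp]]]; [apply gen1; left; auto|].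
  destruct hP as [<-|[<-|[]]]; destruct hp as [b [hb <-]]; [apply gen1, SA_iA; auto|].
  rewrite (i_B_conj b hb). destruct (muinv_spec b hb) as [ha _].
  assert (a1 : cay_adj SA gone (ginv t)) by (right; rewrite invgK, mulg1; apply SA_t).
  assert (a2 : cay_adj SA (ginv t) (ginv t ** i (muinv b))) by (left; rewrite mulKg; apply SA_iA; auto).
  assert (a3 : cay_adj SA (ginv t ** i (muinv b)) (ginv t ** i (muinv b) ** t))
    by (left; rewrite mulKg; apply SA_t).
  eapply (dist_le_trans _ 2 1); [eapply (dist_le_trans _ 1 1)|]; apply dist_le_adj; eauto.
Qed.

Lemma SA_generates : generates SH -> generates SA.
Proof.
  intros hY g P hP hS. apply HNN_induction; auto; [|apply hS, SA_t].
  intro h. apply (hY h (fun h => P (i h))).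
  - split; [|split].
    + rewrite i_one. apply subgroup1; auto.
    + intros x y hx hy. rewrite i_mul. apply subgroupM; auto.
    + intros x hx. rewrite i_inv. apply subgroupV; auto.
  - intros s [hs|[Q [hQ hq]]]; [apply hS; left; right; apply in_map; auto|].
    destruct hQ as [<-|[<-|[]]]; [apply hS, SA_iA; auto|].
    rewrite (i_B_conj s hq). destruct (muinv_spec s hq) as [ha _].
    apply (subgroupM P hP); [apply (subgroupVM P hP)|]; apply hS; auto using SA_t, SA_iA.
Qed.

Lemma weakly_rel_hyperbolic_A_of : generates SH -> cayley_hyperbolic SH ->
  weakly_rel_hyperbolic [image i A].
Proof.
  intros hgen [dH thinH]. exists (t :: map i Y).
  assert (genA : generates SA) by (apply SA_generates; auto).
  split; [exact genA|].
  assert (genAB : generates SAB).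
  { intros g P hP hS. apply genA; auto. intros s hs. apply hS, SA_SAB; auto. }
  apply (cayley_hyperbolic_of_quasi_isometric SA SAB 3 (5 * dH + 2) SA_SAB).
  - apply dist_le_of_walk, SAB_dist_le_SA.
  - apply (thin_of_hyperbolic_fibers SAB (gone, true) pi SAB_pi_adj SAB_edge_lifts_close SH coord dH
      thinH (connected_of_generates SH hgen) SAB_fiber_dist_le SAB_fiber_adj).
  - apply connected_of_generates; auto.
Qed.
End RelativeGenerators.

Lemma weakly_rel_hyperbolic_A : weakly_rel_hyperbolic [A; B] -> weakly_rel_hyperbolic [image i A].
Proof. intros [Y [hg hh]]. apply (weakly_rel_hyperbolic_A_of Y); auto. Qed.
End HNN.

Theorem theorem1p1 (H : group) (A B : H -> Prop) (mu : H -> H)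
  (hA : is_subgroup A) (hB : is_subgroup B) (hmu : is_iso_between A B mu)
  (G : group) (i : H -> G) (t : G) (hG : is_HNN_extension A mu i t) :
  weakly_rel_hyperbolic [image i (fun _ => True)] /\
  (weakly_rel_hyperbolic [A; B] -> weakly_rel_hyperbolic [image i A]).
Proof.
  split.
  - exact (weakly_rel_hyperbolic_H A B mu hA hB hmu i t hG).
  - exact (weakly_rel_hyperbolic_A A B mu hA hB hmu i t hG).
Qed.
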